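(* Let $\mathcal{R}$ be a left-linear almost parallel closed TRS. If $t \;{}_{\mathcal{R}}\!\overset{P_1}{\Leftarrow}\; s \overset{P_2}{\Rightarrow}_\mathcal{R} u$, then (i) there exist $v_1$ and a set $P_1'$ of pairwise parallel positions with $t \to_\mathcal{R}^* v_1$, $u \overset{P_1'}{\Rightarrow}_\mathcal{R} v_1$ and $\mathcal{V}ar(v_1,P_1')\subseteq\mathcal{V}ar(s,P_1)$; and (ii) there exist $v_2$ and a set $P_2'$ of pairwise parallel positions with $t \overset{P_2'}{\Rightarrow}_\mathcal{R} v_2$, $u\to_\mathcal{R}^* v_2$ and $\mathcal{V}ar(v_2,P_2')\subseteq\mathcal{V}ar(s,P_2)$.
   Context: Terms over signature $\mathcal{F}$ and variables $\mathcal{V}$; a TRS is a set of rules $\ell\to r$ with $\ell\notin\mathcal{V}$, $\mathcal{V}ar(r)\subseteq\mathcal{V}ar(\ell)$; left-linear means no variable occurs twice in any left-hand side. Positions are sequences of positive integers, $\epsilon$ the root; $p,q$ are parallel if neither is a prefix of the other; $\mathcal{P}os_\mathcal{F}(t)$ are the function-symbol positions of $t$. Parallel step: for a set $P$ of pairwise parallel positions of $s$, $s \overset{P}{\Rightarrow}_\mathcal{R} t$ iff for every $p\in P$ there are a rule $\ell\to r\in\mathcal{R}$ and substitution $\mu$ with $s|_p=\ell\mu$, $t|_p=r\mu$, and $t=s[t|_p]_{p\in P}$; $s\Rightarrow_\mathcal{R}t$ if this holds for some $P$; $t\;{}_{\mathcal{R}}\!\overset{P}{\Leftarrow}\;s$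 means $s\overset{P}{\Rightarrow}_\mathcal{R}t$. $\mathcal{V}ar(t,P)=\bigcup_{p\in P}\mathcal{V}ar(t|_p)$. Critical peak: if $\ell_1\to r_1$ and $\ell_2\to r_2$ are variants (renamings) of rules of $\mathcal{R}$ with no common variables, $p\in\mathcal{P}os_\mathcal{F}(\ell_2)$, $\sigma$ a most general unifier of $\ell_1$ and $\ell_2|_p$, and (if $p=\epsilon$) $\ell_1\to r_1$ is not a variant of $\ell_2\to r_2$, then $(\ell_2\sigma)[r_1\sigma]_p \xleftarrow{p} \ell_2\sigma\xrightarrow{\epsilon} r_2\sigma$ is a critical peak and $((\ell_2\sigma)[r_1\sigma]_p, r_2\sigma)$ a critical pair at position $p$. $\mathcal{R}$ is almost parallel closed if every critical pair $(t,u)$ at position $p=\epsilon$ satisfies $t\Rightarrow_\mathcal{R}\cdot\leftarrow_\mathcal{R}^* u$ (i.e. $t\Rightarrow_\mathcal{R} w$ and $u\to^*_\mathcal{R} w$ for some $w$), and every critical pair $(t,u)$ at a position $p\neq\epsilon$ satisfies $t\Rightarrow_\mathcal{R} u$. *)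

From Stdlib Require Import List Relations.
Import ListNotations.

Section TRS.
Context {F V : Type}.

(* Terms over function symbols F and variables V (unranked, as in IsaFoR). *)
Inductive term : Type :=
| Var (x : V)
| Fun (f : F) (ts : list term).

Fixpoint subst (sigma : V -> term) (t : term) : term :=
  match t with
  | Var x => sigma x
  | Fun f ts => Fun f (map (subst sigma) ts)
  end.

Fixpoint vars (t : term) : list V :=
  match t with
  | Var x => [x]
  | Fun f ts => flat_map vars ts
  end.

(* Positions: sequences of child indices (0-based here; the paper uses 1-based). *)
Definition pos := list nat.

Fixpoint subterm (t : term) (p : pos) {struct p} : option term :=
  match p with
  | [] => Some t
  | i :: q =>
      match t with
      | Var _ => None
      | Fun _ ts =>
          match nth_error ts i with
          | Some ti => subterm ti q
          | None => None
          end
      end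
  end.

(* t[u]_p ; unchanged if p is not a position of t *)
Fixpoint replace_at (p : pos) (t u : term) {struct p} : term :=
  match p with
  | [] => u
  | i :: q =>
      match t with
      | Var x => Var x
      | Fun f ts =>
          Fun f (map (fun jt => if Nat.eqb i (fst jt) then replace_at q (snd jt) u
                                else snd jt)
                     (combine (seq 0 (length ts)) ts))
      end
  end.

Definition prefix (p q : pos) : Prop := exists r, q = p ++ r.
Definition parallel (p q : pos) : Prop := ~ prefix p q /\ ~ prefix q p.
Definition pairwise_parallel (P : list pos) : Prop :=
  forall p q, In p P -> In q P -> p <> q -> parallel p q.

Definition fill_many (s : term) (l : list (pos * option term)) : term :=
  fold_left (fun acc po => match snd po with
                           | Some u => replace_at (fst po) acc u
                           | None => acc
                           end) l s.

Definition rules := term -> term -> Prop.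

Definition is_TRS (R : rules) : Prop :=
  forall l r, R l r ->
    (forall x, l <> Var x) /\ (forall x, In x (vars r) -> In x (vars l)).

Definition left_linear (R : rules) : Prop :=
  forall l r, R l r -> NoDup (vars l).

Definition rstep (R : rules) (s t : term) : Prop :=
  exists p l r mu, R l r /\ subterm s p = Some (subst mu l) /\
                   t = replace_at p s (subst mu r).

Definition rsteps (R : rules) : term -> term -> Prop := clos_refl_trans term (rstep R).

Definition par_step (R : rules) (P : list pos) (s t : term) : Prop :=
  pairwise_parallel P /\
  (forall p, In p P -> exists l r mu, R l r /\
       subterm s p = Some (subst mu l) /\ subterm t p = Some (subst mu r)) /\
  t = fill_many s (map (fun p => (p, subterm t p)) P).

Definition par_rstep (R : rules) (s t : term) : Prop :=
  exists P, par_step R P s t.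

Definition in_vars_at (t : term) (P : list pos) (x : V) : Prop :=
  exists p w, In p P /\ subterm t p = Some w /\ In x (vars w).

Definition renaming (rho : V -> V) : Prop :=
  exists rho', (forall x, rho' (rho x) = x) /\ (forall x, rho (rho' x) = x).

Definition variant (l1 r1 l2 r2 : term) : Prop :=
  exists rho, renaming rho /\
    l1 = subst (fun x => Var (rho x)) l2 /\ r1 = subst (fun x => Var (rho x)) r2.

Definition variant_of_rule (R : rules) (l r : term) : Prop :=
  exists l0 r0, R l0 r0 /\ variant l r l0 r0.

Definition is_mgu (sigma : V -> term) (a b : term) : Prop :=
  subst sigma a = subst sigma b /\
  forall tau, subst tau a = subst tau b ->
    exists delta, forall x, tau x = subst delta (sigma x).

Definition critical_pair (R : rules) (t u : term) (p : pos) : Prop :=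
  exists l1 r1 l2 r2 sigma l2p,
    variant_of_rule R l1 r1 /\ variant_of_rule R l2 r2 /\
    (forall x, In x (vars l1 ++ vars r1) -> ~ In x (vars l2 ++ vars r2)) /\
    subterm l2 p = Some l2p /\ (exists f ts, l2p = Fun f ts) /\
    is_mgu sigma l1 l2p /\
    (p = [] -> ~ variant l1 r1 l2 r2) /\
    t = replace_at p (subst sigma l2) (subst sigma r1) /\
    u = subst sigma r2.

Definition almost_parallel_closed (R : rules) : Prop :=
  forall t u p, critical_pair R t u p ->
    (p = [] -> exists w, par_rstep R t w /\ rsteps R u w) /\
    (p <> [] -> par_rstep R t u).

End TRS.
Arguments term : clear implicits.

(* Induction on the smaller of the total redex sizes of the two parallel steps, and then on the
   size of [s]. Two inner steps split into peaks on the arguments. Two root steps form a root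
   critical pair (or use the same rule twice) and are closed by almost parallel closedness. For a
   root step with rule [l -> r] against an inner step: an inner redex overlapping a function
   position of [l] forms a critical pair at a non-root position, which is closed by a single
   parallel step; contracting that redex beforehand makes the redex size strictly smaller. If no
   inner redex overlaps [l], left-linearity lets the root step follow the inner one, which then
   reappears as a parallel step on the copies of the variables in [r]. Unification and renaming
   apart are needed only to exhibit the critical pairs. *)

From Stdlib Require Import List Relations ClassicalEpsilon Classical Arith Lia.
Import ListNotations.

(* Indexed [map]; [replace_at] on a [Fun] node unfolds to [mapi 0]. *)
Definition mapi {A B} (k : nat) (g : nat -> A -> B) (l : list A) : list B :=
  map (fun jt => g (fst jt) (snd jt)) (combine (seq k (length l)) l).

Arguments mapi : simpl never.

Lemma mapi_cons {A B} k (g : nat -> A -> B) a l :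
  mapi k g (a :: l) = g k a :: mapi (S k) g l.
Proof. reflexivity. Qed.

Lemma nth_error_mapi {A B} (g : nat -> A -> B) l : forall k j,
  nth_error (mapi k g l) j = option_map (g (k + j)) (nth_error l j).
Proof.
  induction l as [|a l IH]; intros k j; [destruct j; reflexivity|].
  rewrite mapi_cons. destruct j; simpl.
  - rewrite Nat.add_0_r; reflexivity.
  - rewrite IH. do 2 f_equal. lia.
Qed.

Lemma length_mapi {A B} (g : nat -> A -> B) l : forall k, length (mapi k g l) = length l.
Proof. induction l; intros; [reflexivity|]. rewrite mapi_cons; simpl; auto. Qed.

Lemma mapi_id {A} (l : list A) : mapi 0 (fun _ a => a) l = l.
Proof.
  apply nth_error_ext; intro j. rewrite nth_error_mapi. destruct (nth_error l j); reflexivity.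
Qed.

Lemma nth_error_Some_lt {A} (l : list A) j a : nth_error l j = Some a -> j < length l.
Proof. intro H. apply nth_error_Some. congruence. Qed.

Lemma nth_error_lt_Some {A} (l : list A) j : j < length l -> exists a, nth_error l j = Some a.
Proof. intro H. destruct (nth_error l j) eqn:E; eauto. apply nth_error_None in E; lia. Qed.

Lemma nth_error_same_length {A B} (l : list A) (l' : list B) j a :
  length l' = length l -> nth_error l j = Some a -> exists b, nth_error l' j = Some b.
Proof. intros Hl E. apply nth_error_lt_Some. rewrite Hl. eapply nth_error_Some_lt; eauto. Qed.

Lemma finite_choice {A} (n : nat) (Q : nat -> A -> Prop) :
  (forall j, j < n -> exists a, Q j a) ->
  exists l, length l = n /\ forall j a, nth_error l j = Some a -> Q j a.
Proof.
  induction n as [|n IH]; intros H.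
  - exists []; split; auto. intros [|j] a E; discriminate.
  - destruct IH as [l [Hl Hq]]. { intros j Hj; apply H; lia. }
    destruct (H n) as [a Ha]; [lia|].
    exists (l ++ [a]); split. { rewrite length_app; simpl; lia. }
    intros j b E. destruct (Nat.lt_ge_cases j (length l)) as [Hj|Hj].
    + rewrite nth_error_app1 in E by lia. auto.
    + rewrite nth_error_app2 in E by lia.
      destruct (j - length l) as [|k] eqn:Ej; [|destruct k; discriminate].
      injection E as <-. replace j with (length l) by lia. subst; auto.
Qed.

Lemma nth_le_list_sum l : forall j x, nth_error l j = Some x -> x <= list_sum l.
Proof.
  induction l; intros [|j] x E; simpl in *; try discriminate.
  - injection E as <-; lia.
  - specialize (IHl _ _ E); lia.
Qed.

Lemma list_sum_le_pointwise (a b : list nat) : length a = length b ->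
  (forall j x y, nth_error a j = Some x -> nth_error b j = Some y -> x <= y) ->
  list_sum a <= list_sum b.
Proof.
  revert b; induction a as [|x a IH]; intros [|y b] Hl H; simpl in *; try lia.
  assert (x <= y) by (apply (H 0); reflexivity).
  assert (list_sum a <= list_sum b) by (apply IH; [lia | intros j; apply (H (S j))]).
  lia.
Qed.

Lemma list_sum_map_remove {A} (dec : forall x y : A, {x = y} + {x <> y}) (g : A -> nat) l p :
  NoDup l -> In p l -> list_sum (map g l) = g p + list_sum (map g (remove dec p l)).
Proof.
  induction l as [|a l IH]; intros Hnd Hin; [destruct Hin|].
  inversion Hnd; subst. simpl. destruct (dec p a) as [->|Hne].
  - rewrite notin_remove by auto. reflexivity.
  - destruct Hin as [->|Hin]; [congruence|]. simpl. rewrite (IH H2 Hin). lia.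
Qed.

Lemma length_nodup_incl {A} (dec : forall x y : A, {x = y} + {x <> y}) l1 l2 :
  incl l1 l2 -> length (nodup dec l1) <= length (nodup dec l2).
Proof.
  intro H. apply NoDup_incl_length; [apply NoDup_nodup|].
  intros x Hx. apply nodup_In. apply nodup_In in Hx. auto.
Qed.

Lemma length_nodup_incl_lt {A} (dec : forall x y : A, {x = y} + {x <> y}) l1 l2 x :
  incl l1 l2 -> In x l2 -> ~ In x l1 -> length (nodup dec l1) < length (nodup dec l2).
Proof.
  intros H Hx Hn.
  assert (length (nodup dec l1) <= length (remove dec x (nodup dec l2))).
  { apply NoDup_incl_length; [apply NoDup_nodup|].
    intros y Hy. apply nodup_In in Hy. apply in_in_remove.
    - intro; subst; auto.
    - apply nodup_In; auto. }
  pose proof (remove_length_lt dec (nodup dec l2) x) as Hlt. rewrite nodup_In in Hlt.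
  specialize (Hlt Hx). lia.
Qed.

Lemma NoDup_flat_map_in {A B} (g : A -> list B) l a : NoDup (flat_map g l) -> In a l -> NoDup (g a).
Proof.
  induction l as [|c l IH]; intros H Ha; [destruct Ha|]. simpl in H. destruct Ha as [->|Ha].
  - eapply NoDup_app_remove_r; eauto.
  - apply IH; auto. eapply NoDup_app_remove_l; eauto.
Qed.

Lemma NoDup_flat_map_index {A B} (g : A -> list B) l :
  NoDup (flat_map g l) -> forall i j a b x, nth_error l i = Some a -> nth_error l j = Some b ->
  In x (g a) -> In x (g b) -> i = j.
Proof.
  induction l as [|c l IH]; intros Hnd i j a b x Ea Eb Ha Hb; [destruct i; discriminate|].
  simpl in Hnd.
  assert (Hdisj : forall y, In y (g c) -> ~ In y (flat_map g l)).
  { intros y Hy Hy2. apply in_split in Hy2. destruct Hy2 as [l1 [l2 E]]. rewrite E in Hnd.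
    rewrite app_assoc in Hnd. apply NoDup_remove_2 in Hnd. apply Hnd.
    apply in_or_app; left; apply in_or_app; auto. }
  destruct i, j; simpl in Ea, Eb; auto.
  - injection Ea as <-. exfalso. apply (Hdisj x Ha). apply in_flat_map. exists b; split; auto.
    eapply nth_error_In; eauto.
  - injection Eb as <-. exfalso. apply (Hdisj x Hb). apply in_flat_map. exists a; split; auto.
    eapply nth_error_In; eauto.
  - f_equal. eapply IH; eauto. eapply NoDup_app_remove_l; eauto.
Qed.

Section Terms.
Context {F V : Type}.
Notation tm := (term F V).
Implicit Types (t w u : tm) (ts us : list tm) (x y : V) (f : F) (p q : pos) (i j : nat).

Definition term_ind' (Q : tm -> Prop) (HV : forall x, Q (Var x))
  (HF : forall f ts, (forall t, In t ts -> Q t) -> Q (Fun f ts)) : forall t, Q t :=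
  fix go t := match t with
  | Var x => HV x
  | Fun f ts => HF f ts ((fix gol (l : list tm) : forall t, In t l -> Q t :=
       match l with
       | [] => fun t H => False_ind _ H
       | u :: l' => fun t H => match H with
                               | or_introl e => eq_ind u Q (go u) t e
                               | or_intror H' => gol l' t H'
                               end
       end) ts)
  end.

Fixpoint size (t : tm) : nat :=
  match t with Var _ => 1 | Fun _ ts => S (list_sum (map size ts)) end.

Lemma size_pos t : 1 <= size t.
Proof. destruct t; simpl; lia. Qed.

Lemma size_arg f ts t : In t ts -> size t < size (Fun f ts).
Proof.
  simpl. induction ts; intros H; [destruct H|]. destruct H as [->|H]; simpl; [lia|].
  specialize (IHts H). lia.
Qed.

Lemma subst_comp (s d : V -> tm) t :
  subst d (subst s t) = subst (fun x => subst d (s x)) t.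
Proof.
  induction t using term_ind'; simpl; auto. f_equal. rewrite map_map. apply map_ext_in. auto.
Qed.

Lemma subst_ext (s d : V -> tm) t :
  (forall x, In x (vars t) -> s x = d x) -> subst s t = subst d t.
Proof.
  induction t using term_ind'; simpl; intros Hx; auto. f_equal. apply map_ext_in.
  intros a Ha. apply H; auto. intros x Hx'. apply Hx. apply in_flat_map. eauto.
Qed.

Lemma subst_ext_inv (s d : V -> tm) t :
  subst s t = subst d t -> forall x, In x (vars t) -> s x = d x.
Proof.
  induction t using term_ind'; simpl; intros E y Hy.
  - destruct Hy as [->|[]]; auto.
  - injection E as E. apply in_flat_map in Hy. destruct Hy as [a [Ha Hy]].
    apply (H a Ha); auto. clear -E Ha. induction ts; [destruct Ha|]. injection E as E1 E2.
    destruct Ha as [->|Ha]; auto.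
Qed.

Lemma subst_id (t : tm) : subst (fun x => Var x) t = t.
Proof.
  induction t using term_ind'; simpl; auto. f_equal. rewrite <- (map_id ts) at 2.
  apply map_ext_in. auto.
Qed.

Lemma vars_Fun f ts x : In x (vars (Fun f ts)) <-> exists t, In t ts /\ In x (vars t).
Proof. apply in_flat_map. Qed.

Lemma vars_subst (s : V -> tm) t y :
  In y (vars (subst s t)) <-> exists x, In x (vars t) /\ In y (vars (s x)).
Proof.
  induction t using term_ind'; simpl.
  - split; [intro; exists x; auto|]. intros [z [[->|[]] Hz]]; auto.
  - rewrite in_flat_map. split.
    + intros [a [Ha Hy]]. apply in_map_iff in Ha. destruct Ha as [b [<- Hb]].
      apply H in Hy; auto. destruct Hy as [z [Hz Hy]]. exists z; split; auto.
      apply in_flat_map; eauto.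
    + intros [z [Hz Hy]]. apply in_flat_map in Hz. destruct Hz as [b [Hb Hz]].
      exists (subst s b); split; [apply in_map; auto|]. apply H; eauto.
Qed.

Lemma vars_rename (rho : V -> V) t :
  vars (subst (fun x => Var (rho x)) t) = map rho (vars t).
Proof.
  induction t using term_ind'; simpl; auto. rewrite !flat_map_concat_map, map_map, concat_map, map_map.
  f_equal. apply map_ext_in. auto.
Qed.

Lemma subterm_Fun f ts i q : subterm (Fun f ts) (i :: q) =
  match nth_error ts i with Some ti => subterm ti q | None => None end.
Proof. reflexivity. Qed.

Lemma replace_Fun f ts i q u : replace_at (i :: q) (Fun f ts) u =
  Fun f (mapi 0 (fun j tj => if Nat.eqb i j then replace_at q tj u else tj) ts).
Proof. reflexivity. Qed.

Lemma subterm_vars t p w : subterm t p = Some w -> incl (vars w) (vars t).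
Proof.
  revert t; induction p as [|i p IH]; intros t E; simpl in E.
  - injection E as <-; apply incl_refl.
  - destruct t as [|f ts]; [discriminate|]. destruct (nth_error ts i) eqn:E2; [|discriminate].
    intros x Hx. apply vars_Fun. exists t; split; [eapply nth_error_In; eauto | eapply IH; eauto].
Qed.

Lemma subterm_subst (s : V -> tm) t p w :
  subterm t p = Some w -> subterm (subst s t) p = Some (subst s w).
Proof.
  revert t; induction p as [|i p IH]; intros t E; simpl in E.
  - injection E as <-; reflexivity.
  - destruct t as [|f ts]; [discriminate|]. destruct (nth_error ts i) eqn:E2; [|discriminate].
    simpl. rewrite nth_error_map, E2. simpl. auto.
Qed.

Lemma subterm_app t p q :
  subterm t (p ++ q) = match subterm t p with Some w => subterm w q | None => None end.
Proof.
  revert t; induction p as [|i p IH]; intros t; simpl; auto.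
  destruct t; auto. destruct (nth_error ts i); auto.
Qed.

Lemma replace_subst (s : V -> tm) t p w u : subterm t p = Some w ->
  subst s (replace_at p t u) = replace_at p (subst s t) (subst s u).
Proof.
  revert t; induction p as [|i p IH]; intros t E; simpl in E; auto.
  destruct t as [|f ts]; [discriminate|]. destruct (nth_error ts i) eqn:E2; [|discriminate].
  cbn [subst]. rewrite !replace_Fun. cbn [subst]. f_equal. apply nth_error_ext. intros j.
  rewrite nth_error_map, !nth_error_mapi, nth_error_map. simpl.
  destruct (nth_error ts j) eqn:E3; simpl; auto. f_equal.
  destruct (Nat.eqb_spec i j); subst; auto. rewrite E3 in E2; injection E2 as ->. eauto.
Qed.

Lemma prefix_cons i p q : prefix (i :: p) (i :: q) <-> prefix p q.
Proof. unfold prefix. split; intros [r E]; exists r; [injection E|subst]; auto. Qed.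

Lemma prefix_nil p : prefix [] p.
Proof. exists p; reflexivity. Qed.

Lemma subterm_replace_parallel t p q u :
  parallel p q -> subterm (replace_at p t u) q = subterm t q.
Proof.
  revert t q; induction p as [|i p IH]; intros t q [H1 H2].
  - exfalso; apply H1, prefix_nil.
  - destruct q as [|j q]; [exfalso; apply H2, prefix_nil|].
    destruct t as [|f ts]; [reflexivity|]. rewrite replace_Fun, !subterm_Fun, nth_error_mapi. simpl.
    destruct (nth_error ts j) eqn:E; simpl; auto.
    destruct (Nat.eqb_spec i j); subst; auto.
    apply IH. split; intro HH; [apply H1|apply H2]; apply prefix_cons; auto.
Qed.

Lemma vars_replace t p w u :
  subterm t p = Some w -> incl (vars (replace_at p t u)) (vars t ++ vars u).
Proof.
  revert t; induction p as [|i p IH]; intros t E; simpl in E.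
  - intros x Hx; apply in_or_app; auto.
  - destruct t as [|f ts]; [discriminate|]. destruct (nth_error ts i) eqn:E2; [|discriminate].
    rewrite replace_Fun. intros x Hx. apply vars_Fun in Hx. destruct Hx as [a [Ha Hx]].
    apply In_nth_error in Ha. destruct Ha as [j Ha]. rewrite nth_error_mapi in Ha.
    destruct (nth_error ts j) eqn:E3; [|discriminate]. simpl in Ha. injection Ha as <-.
    assert (Hargs : forall a, nth_error ts j = Some a -> In x (vars a) -> In x (vars (Fun f ts))).
    { intros a Ea Hxa. apply vars_Fun. exists a; split; auto. eapply nth_error_In; eauto. }
    destruct (Nat.eqb_spec i j); subst.
    + rewrite E3 in E2; injection E2 as ->. apply IH in Hx; auto. apply in_app_or in Hx.
      destruct Hx; apply in_or_app; eauto.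
    + apply in_or_app; eauto.
Qed.

Lemma subst_merge (ls : list tm) (Ms : list (V -> tm)) : NoDup (flat_map vars ls) ->
  exists mu' : V -> tm, forall j lj M x, nth_error ls j = Some lj -> nth_error Ms j = Some M ->
    In x (vars lj) -> mu' x = M x.
Proof.
  intros Hnd.
  set (owner x := exists j, j < length ls /\ exists lj, nth_error ls j = Some lj /\ In x (vars lj)).
  exists (fun x => match excluded_middle_informative (owner x) with
           | left Hx => nth (proj1_sig (constructive_indefinite_description _ Hx)) Ms (fun y => Var y) x
           | right _ => Var x end).
  intros j lj M x E1 EM Hx. destruct (excluded_middle_informative _) as [Hex|Hn].
  - destruct (constructive_indefinite_description _ Hex) as [j' [Hj' [lj' [E1' Hx']]]]. simpl.
    replace j' with j by (symmetry; eapply (NoDup_flat_map_index vars ls Hnd); eauto).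
    rewrite (nth_error_nth _ _ _ EM). auto.
  - exfalso. apply Hn. exists j. split; [eapply nth_error_Some_lt; eauto|]. eauto.
Qed.

End Terms.

Definition blocks (Ps : list (list pos)) : list pos :=
  concat (mapi 0 (fun j P => map (cons j) P) Ps).

Lemma pos_eq_dec : forall p q : pos, {p = q} + {p <> q}.
Proof. apply list_eq_dec, Nat.eq_dec. Qed.

Lemma in_blocks_from Ps : forall k p,
  In p (concat (mapi k (fun j P => map (cons j) P) Ps)) <->
  exists j P q, nth_error Ps j = Some P /\ In q P /\ p = (k + j) :: q.
Proof.
  induction Ps as [|P0 Ps IH]; intros k p.
  - split; [intros []|]. intros [[|j] [P [q [E _]]]]; discriminate.
  - rewrite mapi_cons. simpl. rewrite in_app_iff, IH. split.
    + intros [H|[j [P [q [E [Hq ->]]]]]].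
      * apply in_map_iff in H. destruct H as [q [<- Hq]]. exists 0, P0, q. rewrite Nat.add_0_r. auto.
      * exists (S j), P, q. simpl. repeat split; auto. f_equal. lia.
    + intros [[|j] [P [q [E [Hq ->]]]]]; simpl in E.
      * injection E as ->. left. rewrite Nat.add_0_r. apply in_map; auto.
      * right. exists j, P, q. repeat split; auto. f_equal. lia.
Qed.

Lemma in_blocks Ps p : In p (blocks Ps) <->
  exists j P q, nth_error Ps j = Some P /\ In q P /\ p = j :: q.
Proof. apply in_blocks_from. Qed.

Lemma blocks_not_root Ps : ~ In [] (blocks Ps).
Proof. intros H. apply in_blocks in H. destruct H as [j [P [q [_ [_ E]]]]]. discriminate. Qed.

Lemma blocks_nil Ps : (forall j P, nth_error Ps j = Some P -> P = []) -> blocks Ps = [].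
Proof.
  intro H. destruct (blocks Ps) as [|p l] eqn:E; auto. exfalso.
  assert (Hp : In p (blocks Ps)) by (rewrite E; left; auto).
  apply in_blocks in Hp. destruct Hp as [j [P [q [E1 [Hq _]]]]]. rewrite (H _ _ E1) in Hq. destruct Hq.
Qed.

Lemma NoDup_blocks Ps : (forall j P, nth_error Ps j = Some P -> NoDup P) -> NoDup (blocks Ps).
Proof.
  unfold blocks. generalize 0. induction Ps as [|P0 Ps IH]; intros k H; [constructor|].
  rewrite mapi_cons. simpl. apply NoDup_app.
  - apply NoDup_map_NoDup_ForallPairs; [intros a b _ _ E; injection E; auto|]. apply (H 0); reflexivity.
  - apply IH. intros j; apply (H (S j)).
  - intros a Ha Hb. apply in_map_iff in Ha. destruct Ha as [q [<- _]].
    apply in_blocks_from in Hb. destruct Hb as [j [P [q' [_ [_ E]]]]]. injection E; lia.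
Qed.

Lemma remove_map_cons i q k P : remove pos_eq_dec (i :: q) (map (cons k) P) =
  if Nat.eqb i k then map (cons k) (remove pos_eq_dec q P) else map (cons k) P.
Proof.
  destruct (Nat.eqb_spec i k) as [<-|Hne]; induction P as [|a P IH]; simpl; auto.
  - destruct (pos_eq_dec (i :: q) (i :: a)) as [E|E], (pos_eq_dec q a) as [E'|E'];
      subst; try congruence; simpl; rewrite IH; reflexivity.
  - destruct (pos_eq_dec (i :: q) (k :: a)) as [E|_]; [injection E; congruence|]. rewrite IH; auto.
Qed.

Lemma remove_blocks i q Ps : remove pos_eq_dec (i :: q) (blocks Ps) =
  blocks (mapi 0 (fun j P => if Nat.eqb i j then remove pos_eq_dec q P else P) Ps).
Proof.
  unfold blocks. generalize 0. induction Ps as [|P0 Ps IH]; intros k; [reflexivity|].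
  rewrite !mapi_cons. simpl. rewrite remove_app, IH, remove_map_cons. f_equal.
  destruct (Nat.eqb i k); reflexivity.
Qed.

Lemma list_sum_blocks (g : pos -> nat) Ps : list_sum (map g (blocks Ps)) =
  list_sum (mapi 0 (fun j P => list_sum (map (fun q => g (j :: q)) P)) Ps).
Proof.
  unfold blocks. generalize 0. induction Ps as [|P0 Ps IH]; intros k; [reflexivity|].
  rewrite !mapi_cons. simpl. rewrite map_app, list_sum_app, IH, map_map. reflexivity.
Qed.

Definition projP j (P : list pos) : list pos :=
  flat_map (fun p => match p with k :: q => if Nat.eqb j k then [q] else [] | [] => [] end) P.

Lemma in_projP j P q : In q (projP j P) <-> In (j :: q) P.
Proof.
  unfold projP. rewrite in_flat_map. split.
  - intros [[|k p] [Hp Hq]]; [destruct Hq|].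
    destruct (Nat.eqb_spec j k); [|destruct Hq]. destruct Hq as [<-|[]]. subst; auto.
  - intros H. exists (j :: q). rewrite Nat.eqb_refl. simpl; auto.
Qed.

Lemma projP_blocks j Ps : projP j (blocks Ps) = match nth_error Ps j with Some Pj => Pj | None => [] end.
Proof.
  assert (Hcons : forall k P0, projP j (map (cons k) P0) = if j =? k then P0 else []).
  { intros k P0. induction P0; simpl; [destruct (j =? k); auto|].
    unfold projP in *. simpl. rewrite IHP0. destruct (j =? k); auto. }
  assert (Hfrom : forall k, projP j (concat (mapi k (fun j P => map (cons j) P) Ps)) =
    if j <? k then [] else match nth_error Ps (j - k) with Some Pj => Pj | None => [] end).
  { induction Ps as [|P0 Ps IH]; intros k.
    - destruct (j <? k); [|destruct (j - k)]; reflexivity.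
    - rewrite mapi_cons. simpl. unfold projP in *. rewrite flat_map_app. fold (projP j).
      rewrite IH, Hcons.
      destruct (Nat.ltb_spec j k), (Nat.eqb_spec j k), (Nat.ltb_spec j (S k)); subst; try lia;
        simpl; try reflexivity.
      + rewrite Nat.sub_diag, app_nil_r. reflexivity.
      + replace (j - k) with (S (j - S k)) by lia. reflexivity. }
  unfold blocks. rewrite Hfrom. simpl. rewrite Nat.sub_0_r. reflexivity.
Qed.

Section ParallelReduction.
Context {F V : Type}.
Notation tm := (term F V).
Implicit Types (t w u s : tm) (ts us : list tm) (x y : V) (f : F) (p q : pos) (i j : nat).
Variable R : @rules F V.

(* An inductive characterisation of [par_step R] (see [par_step_par_red]). *)
Inductive par_red : list pos -> tm -> tm -> Prop :=
| par_red_var x : par_red [] (Var x) (Var x)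
| par_red_root l r mu : R l r -> par_red [[]] (subst mu l) (subst mu r)
| par_red_fun f ts us Ps : length us = length ts -> length Ps = length ts ->
    (forall j tj uj Pj, nth_error ts j = Some tj -> nth_error us j = Some uj ->
       nth_error Ps j = Some Pj -> par_red Pj tj uj) ->
    par_red (blocks Ps) (Fun f ts) (Fun f us).

Lemma par_red_refl t : par_red [] t t.
Proof.
  induction t using term_ind'; [constructor|].
  rewrite <- (blocks_nil (map (fun _ => []) ts)).
  - constructor; [auto | rewrite length_map; auto|].
    intros j tj uj Pj E1 E2 E3. rewrite E1 in E2; injection E2 as <-.
    rewrite nth_error_map, E1 in E3; injection E3 as <-. apply H. eapply nth_error_In; eauto.
  - intros j P E. rewrite nth_error_map in E. destruct (nth_error ts j); [injection E|discriminate]; auto.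
Qed.

Lemma rsteps_subst (d : V -> tm) a b : rsteps R a b -> rsteps R (subst d a) (subst d b).
Proof.
  induction 1 as [a b [p [l [r [mu [Hr [E ->]]]]]]| |]; [|apply rt_refl|eapply rt_trans; eauto].
  apply rt_step. exists p, l, r, (fun x => subst d (mu x)).
  rewrite <- !subst_comp. split; [|split]; auto.
  - apply subterm_subst; auto.
  - eapply replace_subst; eauto.
Qed.

Definition upd i b ts := mapi 0 (fun j tj => if Nat.eqb i j then b else tj) ts.

Lemma nth_error_upd i b ts j :
  nth_error (upd i b ts) j = option_map (fun tj => if Nat.eqb i j then b else tj) (nth_error ts j).
Proof. apply nth_error_mapi. Qed.

Lemma rstep_arg f ts i a b : nth_error ts i = Some a -> rstep R a b ->
  rstep R (Fun f ts) (Fun f (upd i b ts)).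
Proof.
  intros E [p [l [r [mu [Hr [E2 ->]]]]]]. exists (i :: p), l, r, mu. split; auto. split.
  - rewrite subterm_Fun, E; auto.
  - rewrite replace_Fun. f_equal. apply nth_error_ext; intro j. rewrite nth_error_upd, nth_error_mapi.
    destruct (nth_error ts j) eqn:E3; simpl; auto. destruct (Nat.eqb_spec i j); subst; auto.
    rewrite E in E3; injection E3 as ->; auto.
Qed.

Lemma rsteps_arg f a b : rsteps R a b ->
  forall ts i, nth_error ts i = Some a -> rsteps R (Fun f ts) (Fun f (upd i b ts)).
Proof.
  assert (Hupd_upd : forall i b c ts, upd i c (upd i b ts) = upd i c ts).
  { intros. apply nth_error_ext; intro j. rewrite !nth_error_upd. destruct (nth_error ts j); simpl; auto.
    destruct (Nat.eqb i j); auto. }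
  induction 1 as [a b H|a|a c b H1 IH1 H2 IH2]; intros ts i E.
  - apply rt_step. eapply rstep_arg; eauto.
  - replace (upd i a ts) with ts; [apply rt_refl|].
    apply nth_error_ext; intro j. rewrite nth_error_upd.
    destruct (nth_error ts j) eqn:E2; simpl; auto.
    destruct (Nat.eqb_spec i j); subst; congruence.
  - eapply rt_trans; [apply IH1; eauto|]. rewrite <- (Hupd_upd i c b ts). apply IH2.
    rewrite nth_error_upd, E. simpl. rewrite Nat.eqb_refl. reflexivity.
Qed.

Lemma rsteps_args f ts us : length ts = length us ->
  (forall j a b, nth_error ts j = Some a -> nth_error us j = Some b -> rsteps R a b) ->
  rsteps R (Fun f ts) (Fun f us).
Proof.
  intros Hl H. assert (Hf : Forall2 (rsteps R) ts us).
  { revert us Hl H. induction ts; intros [|b us] Hl H; simpl in Hl; try discriminate; constructor.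
    - apply (H 0); reflexivity.
    - apply IHts; [lia|]. intros j; apply (H (S j)). }
  clear Hl H. enough (Hpre : forall pre, rsteps R (Fun f (pre ++ ts)) (Fun f (pre ++ us)))
    by apply (Hpre []).
  induction Hf as [|a b ts us Hab Hf IH]; intros pre; [apply rt_refl|].
  apply rt_trans with (Fun f (pre ++ b :: ts)).
  - replace (pre ++ b :: ts) with (upd (length pre) b (pre ++ a :: ts)).
    + apply (rsteps_arg f a b Hab). rewrite nth_error_app2, Nat.sub_diag by lia. reflexivity.
    + apply nth_error_ext; intro j. rewrite nth_error_upd.
      destruct (Nat.lt_ge_cases j (length pre)).
      * rewrite !nth_error_app1 by lia. destruct (nth_error pre j); simpl; auto.
        destruct (Nat.eqb_spec (length pre) j); auto; lia.
      * rewrite !nth_error_app2 by lia. destruct (j - length pre) eqn:E2; simpl.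
        -- replace j with (length pre) by lia. rewrite Nat.eqb_refl; auto.
        -- destruct (nth_error ts n); simpl; auto. destruct (Nat.eqb_spec (length pre) j); auto; lia.
  - specialize (IH (pre ++ [b])). rewrite <- !app_assoc in IH. apply IH.
Qed.

Lemma par_red_rsteps P s t : par_red P s t -> rsteps R s t.
Proof.
  induction 1.
  - apply rt_refl.
  - apply rt_step. exists [], l, r, mu. auto.
  - apply rsteps_args; [auto|]. intros j a b E1 E2.
    destruct (nth_error_same_length ts Ps j a) as [Pj E3]; eauto.
Qed.

Lemma par_red_subst (d : V -> tm) P s t : par_red P s t -> par_red P (subst d s) (subst d t).
Proof.
  induction 1.
  - apply par_red_refl.
  - rewrite !subst_comp. constructor; auto.
  - simpl. constructor; rewrite ?length_map; auto. intros j tj uj Pj E1 E2 E3.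
    rewrite nth_error_map in E1, E2. destruct (nth_error ts j) eqn:F1; [|discriminate].
    destruct (nth_error us j) eqn:F2; [|discriminate]. injection E1 as <-. injection E2 as <-. eauto.
Qed.

Lemma par_red_redex P s t : par_red P s t -> forall p, In p P -> exists l r mu, R l r /\
  subterm s p = Some (subst mu l) /\ subterm t p = Some (subst mu r).
Proof.
  induction 1; intros p Hp.
  - destruct Hp.
  - destruct Hp as [<-|[]]. exists l, r, mu. auto.
  - apply in_blocks in Hp. destruct Hp as [j [Pj [q [E3 [Hq ->]]]]].
    destruct (nth_error_same_length Ps ts j Pj) as [tj E1]; auto.
    destruct (nth_error_same_length Ps us j Pj) as [uj E2]; [congruence|auto|].
    rewrite !subterm_Fun, E1, E2. eapply H2; eauto.
Qed.

Lemma par_red_parallel P s t : par_red P s t -> pairwise_parallel P.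
Proof.
  induction 1; intros a b Ha Hb Hne.
  - destruct Ha.
  - destruct Ha as [<-|[]]; destruct Hb as [<-|[]]; congruence.
  - apply in_blocks in Ha, Hb. destruct Ha as [j [Pj [q [E3 [Hq ->]]]]].
    destruct Hb as [j' [Pj' [q' [E3' [Hq' ->]]]]].
    destruct (Nat.eq_dec j j') as [<-|Hj].
    + rewrite E3 in E3'; injection E3' as <-.
      destruct (nth_error_same_length Ps ts j Pj) as [tj E1]; auto.
      destruct (nth_error_same_length Ps us j Pj) as [uj E2]; [congruence|auto|].
      destruct (H2 _ _ _ _ E1 E2 E3 _ _ Hq Hq') as [N1 N2]; [congruence|].
      split; intro HH; apply prefix_cons in HH; auto.
    + split; intros [r E]; injection E; auto.
Qed.

Lemma par_red_NoDup P s t : par_red P s t -> NoDup P.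
Proof.
  induction 1; [constructor | repeat constructor; intros []|].
  apply NoDup_blocks. intros j Pj E3.
  destruct (nth_error_same_length Ps ts j Pj) as [tj E1]; auto.
  destruct (nth_error_same_length Ps us j Pj) as [uj E2]; [congruence|auto|]. eauto.
Qed.

Lemma in_vars_at_vars t P x : in_vars_at t P x -> In x (vars t).
Proof. intros [p [w [_ [E Hx]]]]. eapply subterm_vars; eauto. Qed.

Lemma in_vars_at_root s x : In x (vars s) -> in_vars_at s [[]] x.
Proof. intros H. exists [], s. simpl; auto. Qed.

Lemma in_vars_at_blocks f ws Qs x : in_vars_at (Fun f ws) (blocks Qs) x <->
  exists j wj Qj, nth_error ws j = Some wj /\ nth_error Qs j = Some Qj /\ in_vars_at wj Qj x.
Proof.
  split.
  - intros [p [w [Hp [Ew Hx]]]]. apply in_blocks in Hp. destruct Hp as [j [Qj [q [E3 [Hq ->]]]]].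
    rewrite subterm_Fun in Ew. destruct (nth_error ws j) as [wj|] eqn:E1; [|discriminate].
    exists j, wj, Qj. repeat split; auto. exists q, w; auto.
  - intros [j [wj [Qj [E1 [E3 [q [w [Hq [Ew Hx]]]]]]]]]. exists (j :: q), w. split; [|split; auto].
    + apply in_blocks. exists j, Qj, q; auto.
    + rewrite subterm_Fun, E1; auto.
Qed.

Section VariableConditions.
Hypothesis HTRS : is_TRS R.

Lemma rule_vars l r (mu : V -> tm) : R l r -> incl (vars (subst mu r)) (vars (subst mu l)).
Proof.
  intros Hr x Hx. apply vars_subst in Hx. destruct Hx as [z [Hz Hx]]. apply vars_subst.
  exists z; split; auto. apply (proj2 (HTRS _ _ Hr)); auto.
Qed.

Lemma rsteps_vars a b : rsteps R a b -> incl (vars b) (vars a).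
Proof.
  induction 1 as [a b [p [l [r [mu [Hr [E ->]]]]]]| |]; [|apply incl_refl|eapply incl_tran; eauto].
  intros x Hx. apply (vars_replace _ _ _ _ E), in_app_or in Hx. destruct Hx as [Hx|Hx]; auto.
  apply (rule_vars l r mu Hr) in Hx. eapply subterm_vars; eauto.
Qed.

Lemma par_red_vars P s t : par_red P s t -> incl (vars t) (vars s).
Proof. intros H. apply rsteps_vars. eapply par_red_rsteps; eauto. Qed.

Lemma par_red_in_vars_at P s t : par_red P s t -> forall x, in_vars_at t P x -> in_vars_at s P x.
Proof.
  intros H x [p [w [Hp [E Hx]]]]. destruct (par_red_redex _ _ _ H p Hp) as [l [r [mu [Hr [E1 E2]]]]].
  rewrite E2 in E; injection E as <-. exists p, (subst mu l). repeat split; auto.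
  apply (rule_vars l r mu Hr); auto.
Qed.

End VariableConditions.

Definition size_at s p := match subterm s p with Some w => size w | None => 0 end.

(* The induction measure of the main argument. *)
Definition redex_size s (P : list pos) := list_sum (map (size_at s) P).

Lemma redex_size_blocks f ts Ps : redex_size (Fun f ts) (blocks Ps) =
  list_sum (mapi 0 (fun j P => match nth_error ts j with Some tj => redex_size tj P | None => 0 end) Ps).
Proof.
  unfold redex_size. rewrite list_sum_blocks. f_equal. apply nth_error_ext. intro j. unfold pos in *.
  rewrite !nth_error_mapi. destruct (nth_error Ps j) as [P|]; simpl; auto. f_equal.
  unfold size_at. destruct (nth_error ts j) eqn:E.
  - f_equal. apply map_ext. intro q. rewrite subterm_Fun, E. reflexivity.
  - erewrite map_ext with (g := fun _ => 0); [induction P; simpl; auto|].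
    intro q; rewrite subterm_Fun, E; reflexivity.
Qed.

Lemma redex_size_le_size P s t : par_red P s t -> redex_size s P <= size s.
Proof.
  induction 1.
  - unfold redex_size; simpl; lia.
  - unfold redex_size, size_at; simpl. lia.
  - rewrite redex_size_blocks. simpl. apply le_S. apply list_sum_le_pointwise.
    + rewrite length_mapi, length_map; auto.
    + intros j a b Ea Eb. rewrite nth_error_mapi in Ea. rewrite nth_error_map in Eb.
      destruct (nth_error Ps j) as [Pj|] eqn:E3; [|discriminate]. simpl in Ea.
      destruct (nth_error ts j) as [tj|] eqn:E1; [|discriminate]. injection Eb as <-.
      destruct (nth_error_same_length ts us j tj) as [uj E2]; auto.
      injection Ea as <-. eauto.
Qed.

Lemma redex_size_block_le f ts Ps j tj Pj : nth_error ts j = Some tj -> nth_error Ps j = Some Pj ->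
  redex_size tj Pj <= redex_size (Fun f ts) (blocks Ps).
Proof.
  intros E1 E3. rewrite redex_size_blocks. apply (nth_le_list_sum _ j).
  rewrite nth_error_mapi, E3. simpl. rewrite E1; auto.
Qed.

Lemma redex_size_ext s s' P :
  (forall q, In q P -> subterm s q = subterm s' q) -> redex_size s P = redex_size s' P.
Proof. intro H. unfold redex_size. f_equal. apply map_ext_in. intros q Hq. unfold size_at. rewrite H; auto. Qed.

Lemma par_red_remove P s t : par_red P s t -> forall p w, In p P -> subterm t p = Some w ->
  par_red (remove pos_eq_dec p P) (replace_at p s w) t.
Proof.
  induction 1; intros p w Hp Ew.
  - destruct Hp.
  - destruct Hp as [<-|[]]. simpl in Ew. injection Ew as <-. simpl.
    destruct (pos_eq_dec [] []); [apply par_red_refl|congruence].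
  - apply in_blocks in Hp. destruct Hp as [i [Pi [q [E3 [Hq ->]]]]].
    rewrite subterm_Fun in Ew. destruct (nth_error us i) as [ui|] eqn:E2; [|discriminate].
    rewrite remove_blocks, replace_Fun. constructor; rewrite ?length_mapi; auto.
    intros j tj uj Pj F1 F2 F3. rewrite nth_error_mapi in F1.
    pose proof (nth_error_mapi (fun j (P : list pos) => if i =? j then remove pos_eq_dec q P else P)
      Ps 0 j) as F3'. rewrite F3 in F3'. simpl in F1, F3'.
    destruct (nth_error ts j) as [tj0|] eqn:G1; [|discriminate].
    destruct (nth_error Ps j) as [Pj0|] eqn:G3; [|discriminate]. simpl in F1, F3'.
    injection F1 as <-. injection F3' as ->. destruct (Nat.eqb_spec i j); subst.
    + rewrite E3 in G3; injection G3 as ->. rewrite E2 in F2; injection F2 as ->. eauto.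
    + eauto.
Qed.

Definition fill_proj j (l : list (pos * option tm)) : list (pos * option tm) :=
  flat_map (fun po => match fst po with
                      | k :: q => if Nat.eqb j k then [(q, snd po)] else []
                      | [] => [] end) l.

Lemma fill_proj_map j (G : pos -> option tm) P :
  fill_proj j (map (fun p => (p, G p)) P) = map (fun q => (q, G (j :: q))) (projP j P).
Proof.
  induction P as [|p P IH]; [reflexivity|]. simpl. rewrite IH, map_app. f_equal.
  destruct p as [|k q]; simpl; auto. destruct (Nat.eqb_spec j k); subst; reflexivity.
Qed.

Lemma fill_many_Fun f l : forall ts, (forall po, In po l -> fst po <> []) ->
  fill_many (Fun f ts) l = Fun f (mapi 0 (fun j tj => fill_many tj (fill_proj j l)) ts).
Proof.
  induction l as [|[p o] l IH]; intros ts H.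
  - unfold fill_many. simpl. rewrite mapi_id. reflexivity.
  - destruct p as [|k q]; [exfalso; apply (H ([], o)); simpl; auto|].
    assert (Hcons : forall s po l, fill_many s (po :: l) =
      fill_many (match snd po with Some u => replace_at (fst po) s u | None => s end) l)
      by reflexivity.
    assert (Happ : forall s l1 l2, fill_many s (l1 ++ l2) = fill_many (fill_many s l1) l2)
      by (intros; apply fold_left_app).
    rewrite Hcons. cbn [fst snd]. destruct o as [u|].
    + rewrite replace_Fun, IH by (intros; apply H; simpl; auto). f_equal.
      apply nth_error_ext; intro j. rewrite !nth_error_mapi. destruct (nth_error ts j) as [tj|]; simpl; auto.
      f_equal. unfold fill_proj at 2. simpl. rewrite Happ. fold (fill_proj j l). f_equal.
      rewrite (Nat.eqb_sym j k). destruct (Nat.eqb k j); reflexivity.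
    + rewrite IH by (intros; apply H; simpl; auto). f_equal.
      apply nth_error_ext; intro j. rewrite !nth_error_mapi. destruct (nth_error ts j) as [tj|]; simpl; auto.
      f_equal. unfold fill_proj at 2. simpl. rewrite Happ. fold (fill_proj j l). f_equal.
      destruct (Nat.eqb j k); reflexivity.
Qed.

Lemma par_red_fill P s t : par_red P s t -> t = fill_many s (map (fun p => (p, subterm t p)) P).
Proof.
  induction 1; [reflexivity|reflexivity|].
  rewrite fill_many_Fun.
  2:{ intros po Hpo. apply in_map_iff in Hpo. destruct Hpo as [p [<- Hp]] . simpl. intros ->.
      eapply blocks_not_root; eauto. }
  f_equal. apply nth_error_ext; intro j. rewrite nth_error_mapi. simpl.
  rewrite fill_proj_map, projP_blocks.
  destruct (nth_error ts j) as [tj|] eqn:E1; simpl.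
  - destruct (nth_error_same_length ts us j tj) as [uj E2]; auto.
    destruct (nth_error_same_length ts Ps j tj) as [Pj E3]; auto.
    rewrite E2, E3. f_equal. apply (H2 _ _ _ _ E1 E2 E3).
  - apply nth_error_None. apply nth_error_None in E1. lia.
Qed.

Lemma par_red_par_step P s t : par_red P s t -> par_step R P s t.
Proof.
  intros H. split; [eapply par_red_parallel; eauto|]. split.
  - intros p Hp. eapply par_red_redex; eauto.
  - apply par_red_fill; auto.
Qed.

Lemma par_step_at_root P s t : par_step R P s t -> In [] P ->
  par_red [[]] s t /\ forall p, In p P <-> p = [].
Proof.
  intros [Hpar [Hred _]] Hn. destruct (Hred _ Hn) as [l [r [mu [Hr [E1 E2]]]]].
  injection E1 as ->. injection E2 as ->. split; [constructor; auto|].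
  intros p. split; [|intros ->; auto]. intros Hp. destruct (pos_eq_dec p []) as [->|Hne]; auto.
  exfalso. destruct (Hpar _ _ Hp Hn Hne) as [_ HH]. apply HH, prefix_nil.
Qed.

Lemma par_step_args P f ts t : par_step R P (Fun f ts) t -> ~ In [] P ->
  exists us, t = Fun f us /\ length us = length ts /\ forall j tj, nth_error ts j = Some tj ->
    exists uj, nth_error us j = Some uj /\ par_step R (projP j P) tj uj.
Proof.
  intros [Hpar [Hred Heq]] Hn.
  rewrite fill_many_Fun in Heq.
  2:{ intros po Hpo. apply in_map_iff in Hpo. destruct Hpo as [p [<- Hp]]. simpl. intros ->; auto. }
  set (us := mapi 0 _ ts) in Heq. exists us. split; [auto|]. split; [apply length_mapi|].
  intros j tj E1. eexists. split; [unfold us; rewrite nth_error_mapi, E1; reflexivity|].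
  assert (Hst : forall q, subterm t (j :: q) = subterm (fill_many tj (fill_proj j
    (map (fun p => (p, subterm t p)) P))) q).
  { intros q. rewrite Heq at 1. rewrite subterm_Fun. unfold us. rewrite nth_error_mapi, E1. reflexivity. }
  split; [|split].
  - intros a b Ha Hb Hab. apply in_projP in Ha, Hb.
    destruct (Hpar _ _ Ha Hb) as [N1 N2]; [congruence|].
    split; intro HH; [apply N1|apply N2]; apply prefix_cons; auto.
  - intros q Hq. apply in_projP in Hq. destruct (Hred _ Hq) as [l [r [mu [Hr [G1 G2]]]]].
    exists l, r, mu. rewrite subterm_Fun, E1 in G1. rewrite <- Hst. auto.
  - rewrite fill_proj_map at 1. f_equal. apply map_ext. intro q. rewrite Hst. reflexivity.
Qed.

Lemma par_step_par_red s : forall P t, par_step R P s t ->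
  exists P', par_red P' s t /\ forall p, In p P <-> In p P'.
Proof.
  induction s as [x|f ts IH] using term_ind'; intros P t H;
    (destruct (classic (In [] P)) as [Hn|Hn];
     [exists [[]]; destruct (par_step_at_root _ _ _ H Hn) as [H1 H2]; split; auto;
      intros p; rewrite H2; simpl; intuition|]).
  - destruct H as [_ [Hred Heq]]. destruct P as [|p P].
    + exists []. cbn in Heq. subst t. split; [constructor|tauto].
    + exfalso. destruct (Hred p (or_introl eq_refl)) as [l [r [mu [_ [E _]]]]].
      destruct p; [apply Hn; left; auto|discriminate].
  - destruct (par_step_args _ _ _ _ H Hn) as [us [-> [Hlus Hus]]].
    assert (Hex : forall j, j < length ts -> exists Pj, forall tj uj, nth_error ts j = Some tj ->
        nth_error us j = Some uj -> par_red Pj tj uj /\ forall q, In q (projP j P) <-> In q Pj).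
    { intros j Hj. destruct (nth_error_lt_Some ts j Hj) as [tj E1].
      destruct (Hus j tj E1) as [uj [E2 Hps]]. destruct (IH tj (nth_error_In _ _ E1) _ _ Hps) as [Pj HPj].
      exists Pj. intros tj' uj' E1' E2'. congruence. }
    apply finite_choice in Hex. destruct Hex as [Ps [HlPs HPs]].
    exists (blocks Ps). split.
    + constructor; auto. intros j tj uj Pj E1 E2 E3. apply (HPs j Pj E3); auto.
    + intros p. rewrite in_blocks. split.
      * intros Hp. destruct p as [|j q]; [contradiction|].
        destruct H as [_ [Hred _]]. destruct (Hred _ Hp) as [l [r [mu [_ [G1 _]]]]].
        rewrite subterm_Fun in G1. destruct (nth_error ts j) as [tj|] eqn:E1; [|discriminate].
        destruct (nth_error_same_length ts us j tj) as [uj E2]; auto.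
        destruct (nth_error_same_length ts Ps j tj) as [Pj E3]; auto.
        exists j, Pj, q. repeat split; auto. apply (HPs j Pj E3 tj uj E1 E2). apply in_projP; auto.
      * intros [j [Pj [q [E3 [Hq ->]]]]].
        destruct (nth_error_same_length Ps ts j Pj) as [tj E1]; auto.
        destruct (nth_error_same_length Ps us j Pj) as [uj E2]; [congruence|auto|].
        apply in_projP. apply (HPs j Pj E3 tj uj E1 E2). auto.
Qed.

Lemma par_red_inv P s t : par_red P s t ->
  (P = [] /\ t = s) \/
  (P = [[]] /\ exists l r (mu : V -> tm), R l r /\ s = subst mu l /\ t = subst mu r) \/
  (exists f ts us Ps, s = Fun f ts /\ t = Fun f us /\ P = blocks Ps /\ length us = length ts /\
     length Ps = length ts /\ forall j tj uj Pj, nth_error ts j = Some tj -> nth_error us j = Some uj ->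
       nth_error Ps j = Some Pj -> par_red Pj tj uj).
Proof.
  intros []; [left | right; left | right; right]; eauto 10.
Qed.

Definition par_red_at_vars (l : tm) (P : list pos) (mu mu' : V -> tm) :=
  forall x, In x (vars l) -> exists Px, par_red Px (mu x) (mu' x) /\
    forall q, In q Px -> exists o, subterm l o = Some (Var x) /\ In (o ++ q) P.

Lemma par_red_at_vars_args g ls us Ps (mu : V -> tm) : NoDup (flat_map vars ls) ->
  length us = length ls -> length Ps = length ls ->
  (forall j lj uj Pj, nth_error ls j = Some lj -> nth_error us j = Some uj ->
     nth_error Ps j = Some Pj -> exists M, uj = subst M lj /\ par_red_at_vars lj Pj mu M) ->
  exists mu', Fun g us = subst mu' (Fun g ls) /\ par_red_at_vars (Fun g ls) (blocks Ps) mu mu'.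
Proof.
  intros Hnd Hl1 Hl2 H.
  assert (Hex : forall j, j < length ls -> exists M, exists lj uj Pj, nth_error ls j = Some lj /\
    nth_error us j = Some uj /\ nth_error Ps j = Some Pj /\ uj = subst M lj /\
    par_red_at_vars lj Pj mu M).
  { intros j Hj. destruct (nth_error_lt_Some ls j Hj) as [lj E1].
    destruct (nth_error_same_length ls us j lj) as [uj E2]; auto.
    destruct (nth_error_same_length ls Ps j lj) as [Pj E3]; auto.
    destruct (H j lj uj Pj E1 E2 E3) as [M HM]. exists M, lj, uj, Pj. auto. }
  apply finite_choice in Hex. destruct Hex as [Ms [HlMs HMs]].
  destruct (subst_merge ls Ms Hnd) as [mu' Hmu'].
  assert (Hget : forall j lj, nth_error ls j = Some lj -> exists M uj Pj, nth_error Ms j = Some M /\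
    nth_error us j = Some uj /\ nth_error Ps j = Some Pj /\ uj = subst M lj /\
    par_red_at_vars lj Pj mu M).
  { intros j lj E1. destruct (nth_error_same_length ls Ms j lj) as [M EM]; auto.
    destruct (HMs j M EM) as [lj' [uj [Pj [E1' [E2 [E3 HM]]]]]].
    rewrite E1 in E1'. injection E1' as <-. exists M, uj, Pj. auto. }
  exists mu'. split.
  - simpl. f_equal. apply nth_error_ext. intros j. rewrite nth_error_map.
    destruct (nth_error ls j) as [lj|] eqn:E1.
    + destruct (Hget j lj E1) as [M [uj [Pj [EM [E2 [E3 [-> _]]]]]]]. rewrite E2. simpl. f_equal.
      apply subst_ext. intros x Hx. symmetry. eapply Hmu'; eauto.
    + apply nth_error_None. apply nth_error_None in E1. lia.
  - intros x Hx. apply vars_Fun in Hx. destruct Hx as [lj [Hlj Hx]]. apply In_nth_error in Hlj.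
    destruct Hlj as [j E1]. destruct (Hget j lj E1) as [M [uj [Pj [EM [E2 [E3 [_ HM]]]]]]].
    destruct (HM x Hx) as [Px [HP1 HP2]]. exists Px. rewrite (Hmu' j lj M x E1 EM Hx). split; auto.
    intros q Hq. destruct (HP2 q Hq) as [o [Eo Ho]]. exists (j :: o). split.
    + rewrite subterm_Fun, E1; auto.
    + apply in_blocks. exists j, Pj, (o ++ q). auto.
Qed.

Lemma par_red_below_linear l : NoDup (vars l) -> forall (mu : V -> tm) P t, par_red P (subst mu l) t ->
  (forall p, In p P -> forall g gs, subterm l p <> Some (Fun g gs)) ->
  exists mu' : V -> tm, t = subst mu' l /\ par_red_at_vars l P mu mu'.
Proof.
  induction l as [z|g ls IH] using term_ind'; intros Hnd mu P t H Hnf.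
  { exists (fun _ => t). split; auto. intros x [<-|[]]. exists P. split; auto.
    intros q Hq. exists []. auto. }
  destruct (par_red_inv _ _ _ H) as [[-> ->]|[[EP _]|[f [ts [us [Ps [Es [-> [-> [Hl1 [Hl2 Hj]]]]]]]]]]].
  { exists mu. split; auto. intros x Hx. exists []. split; [apply par_red_refl|]. intros q []. }
  { exfalso. apply (Hnf [] ltac:(rewrite EP; left; auto) g ls). reflexivity. }
  simpl in Es. injection Es as <- <-. rewrite length_map in Hl1, Hl2.
  apply par_red_at_vars_args; auto. intros j lj uj Pj E1 E2 E3.
  apply (IH lj (nth_error_In _ _ E1) (NoDup_flat_map_in vars ls lj Hnd (nth_error_In _ _ E1))).
  - apply (Hj j); auto. rewrite nth_error_map, E1; auto.
  - intros p Hp g' gs' Eg. refine (Hnf (j :: p) _ g' gs' _).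
    + apply in_blocks. exists j, Pj, p; auto.
    + rewrite subterm_Fun, E1; exact Eg.
Qed.

Lemma par_red_subst_vars (Q : V -> list pos -> Prop) r : forall (mu mu' : V -> tm),
  (forall x, In x (vars r) -> exists Px, par_red Px (mu x) (mu' x) /\ Q x Px) ->
  exists P', par_red P' (subst mu r) (subst mu' r) /\ forall p, In p P' -> exists o x q Px,
    subterm r o = Some (Var x) /\ Q x Px /\ par_red Px (mu x) (mu' x) /\ In q Px /\ p = o ++ q.
Proof.
  induction r as [z|g rs IH] using term_ind'; intros mu mu' H.
  { destruct (H z (or_introl eq_refl)) as [Px [H1 H2]]. exists Px. split; auto.
    intros p Hp. exists [], z, p, Px. auto. }
  assert (Hex : forall j, j < length rs -> exists Pj, forall rj, nth_error rs j = Some rj ->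
      par_red Pj (subst mu rj) (subst mu' rj) /\ forall p, In p Pj -> exists o x q Px,
      subterm rj o = Some (Var x) /\ Q x Px /\ par_red Px (mu x) (mu' x) /\ In q Px /\ p = o ++ q).
  { intros j Hj. destruct (nth_error_lt_Some rs j Hj) as [rj E1].
    destruct (IH rj (nth_error_In _ _ E1) mu mu') as [Pj HPj].
    { intros x Hx. apply H. apply vars_Fun. exists rj; split; auto. eapply nth_error_In; eauto. }
    exists Pj. intros rj' E1'. rewrite E1 in E1'. injection E1' as <-. auto. }
  apply finite_choice in Hex. destruct Hex as [Ps [HlPs HPs]].
  exists (blocks Ps). split.
  - simpl. constructor; rewrite ?length_map; auto. intros j tj uj Pj E1 E2 E3.
    rewrite nth_error_map in E1, E2. destruct (nth_error rs j) as [rj|] eqn:F1; [|discriminate].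
    injection E1 as <-; injection E2 as <-. apply (HPs j Pj E3 rj F1).
  - intros p Hp. apply in_blocks in Hp. destruct Hp as [j [Pj [p' [E3 [Hp' ->]]]]].
    destruct (nth_error_same_length Ps rs j Pj) as [rj E1]; auto.
    destruct (proj2 (HPs j Pj E3 rj E1) p' Hp') as [o [x [q [Px [A1 [A2 [A3 [A4 ->]]]]]]]].
    exists (j :: o), x, q, Px. repeat split; auto. rewrite subterm_Fun, E1; auto.
Qed.
End ParallelReduction.

Section Unification.
Context {F V : Type}.
Notation tm := (term F V).
Implicit Types (t w u s a b : tm) (ts us : list tm) (x y : V) (f : F).

Definition eqV (x y : V) : {x = y} + {x <> y} := excluded_middle_informative _.

Definition unifies (sg : V -> tm) (E : list (tm * tm)) :=
  forall a b, In (a, b) E -> subst sg a = subst sg b.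
Definition mgu_prop sg E :=
  unifies sg E /\ forall tau, unifies tau E -> exists d, forall x, tau x = subst d (sg x).

Definition eqs_vars (E : list (tm * tm)) := flat_map (fun e => vars (fst e) ++ vars (snd e)) E.
Definition eqs_size (E : list (tm * tm)) := list_sum (map (fun e => size (fst e) + size (snd e)) E).
Definition eqs_nvars E := length (nodup eqV (eqs_vars E)).

Lemma unifies_cons sg a b E : unifies sg ((a, b) :: E) <-> subst sg a = subst sg b /\ unifies sg E.
Proof.
  unfold unifies. split.
  - intros H. split; [apply H; left; auto|]. intros; apply H; right; auto.
  - intros [H1 H2] a' b' [E'|E']; [injection E' as <- <-|]; auto.
Qed.

Lemma unifies_app sg l1 l2 : unifies sg (l1 ++ l2) <-> unifies sg l1 /\ unifies sg l2.
Proof.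
  unfold unifies. split.
  - intros H; split; intros; apply H; apply in_or_app; auto.
  - intros [H1 H2] a b Hab. apply in_app_or in Hab. destruct Hab; auto.
Qed.

Lemma unifies_combine sg : forall as_ bs, length as_ = length bs ->
  (unifies sg (combine as_ bs) <-> map (subst sg) as_ = map (subst sg) bs).
Proof.
  induction as_ as [|a as_ IH]; intros [|b bs] Hl; simpl in Hl; try discriminate.
  - simpl. split; auto. intros _ a b [].
  - simpl. rewrite unifies_cons, IH by lia. split; [intros [-> ->]; auto|intros E; injection E; auto].
Qed.

Lemma eqs_vars_combine : forall as_ bs, length as_ = length bs -> forall x,
  In x (eqs_vars (combine as_ bs)) <-> In x (flat_map vars as_ ++ flat_map vars bs).
Proof.
  induction as_ as [|a as_ IH]; intros [|b bs] Hl x; simpl in Hl; try discriminate.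
  - simpl. tauto.
  - simpl. rewrite !in_app_iff. unfold eqs_vars in IH. rewrite IH by lia. rewrite !in_app_iff. tauto.
Qed.

Lemma eqs_size_combine : forall as_ bs, length as_ = length bs ->
  eqs_size (combine as_ bs) = list_sum (map size as_) + list_sum (map size bs).
Proof.
  induction as_ as [|a as_ IH]; intros [|b bs] Hl; simpl in Hl; try discriminate; auto.
  specialize (IH bs ltac:(lia)). unfold eqs_size in *. simpl. rewrite IH. lia.
Qed.

Lemma eqs_nvars_ext E1 E2 :
  (forall x, In x (eqs_vars E1) <-> In x (eqs_vars E2)) -> eqs_nvars E1 = eqs_nvars E2.
Proof. intros H. unfold eqs_nvars. apply Nat.le_antisymm; apply length_nodup_incl; intros x; apply H. Qed.

Lemma mgu_prop_equiv sg E E' :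
  (forall tau, unifies tau E <-> unifies tau E') -> mgu_prop sg E -> mgu_prop sg E'.
Proof. intros H [Hu Hm]. split; [apply H; auto|]. intros tau Ht. apply Hm, H; auto. Qed.

Lemma size_subst_var x b (tau : V -> tm) : In x (vars b) -> size (tau x) <= size (subst tau b).
Proof.
  induction b as [y|f ts IH] using term_ind'; intros H.
  - destruct H as [->|[]]; simpl; auto.
  - apply vars_Fun in H. destruct H as [a [Ha Hx]]. specialize (IH a Ha Hx).
    pose proof (size_arg f (map (subst tau) ts) (subst tau a) (in_map _ _ _ Ha)). simpl in *. lia.
Qed.

Lemma occurs_check x g bs (tau : V -> tm) :
  In x (vars (Fun g bs)) -> tau x <> subst tau (Fun g bs).
Proof.
  intros H E. apply vars_Fun in H. destruct H as [a [Ha Hx]]. pose proof (size_subst_var x a tau Hx).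
  pose proof (size_arg g (map (subst tau) bs) (subst tau a) (in_map _ _ _ Ha)).
  rewrite E in *. simpl in *. lia.
Qed.

Definition elim_subst x b y := if eqV y x then b else Var y.

Definition subst_eqs (th : V -> tm) (E : list (tm * tm)) :=
  map (fun e => (subst th (fst e), subst th (snd e))) E.

Lemma vars_elim_subst x b t y : In y (vars (subst (elim_subst x b) t)) ->
  (In y (vars b)) \/ (y <> x /\ In y (vars t)).
Proof.
  intros Hy. apply vars_subst in Hy. destruct Hy as [z [Hz Hyz]]. unfold elim_subst in Hyz.
  destruct (eqV z x) as [->|Hne]; auto. destruct Hyz as [->|[]]. auto.
Qed.

Lemma eqs_nvars_elim_lt x b E : ~ In x (vars b) ->
  eqs_nvars (subst_eqs (elim_subst x b) E) < eqs_nvars ((Var x, b) :: E).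
Proof.
  intros Hx. unfold eqs_nvars. apply length_nodup_incl_lt with (x := x); [| simpl; auto |].
  - intros y Hy. unfold subst_eqs, eqs_vars in Hy. apply in_flat_map in Hy.
    destruct Hy as [[a c] [Hac Hy]]. apply in_map_iff in Hac. destruct Hac as [[a0 c0] [Eq Hin]].
    injection Eq as <- <-. simpl. right. apply in_or_app.
    assert (Hin0 : forall t, In t [a0; c0] -> incl (vars t) (eqs_vars E)).
    { intros t Ht z Hz. apply in_flat_map. exists (a0, c0). split; auto.
      destruct Ht as [<-|[<-|[]]]; apply in_or_app; auto. }
    apply in_app_or in Hy. destruct Hy as [Hy|Hy]; apply vars_elim_subst in Hy;
      destruct Hy as [Hy|[_ Hy]]; auto; right.
    + apply (Hin0 a0); simpl; auto.
    + apply (Hin0 c0); simpl; auto.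
  - intro Hy. unfold subst_eqs, eqs_vars in Hy. apply in_flat_map in Hy.
    destruct Hy as [[a c] [Hac Hy]]. apply in_map_iff in Hac. destruct Hac as [[a0 c0] [Eq Hin]].
    injection Eq as <- <-. apply in_app_or in Hy.
    destruct Hy as [Hy|Hy]; apply vars_elim_subst in Hy; tauto.
Qed.

Lemma mgu_elim x b E :
  (forall E', eqs_nvars E' < eqs_nvars ((Var x, b) :: E) ->
     (exists tau, unifies tau E') -> exists sg, mgu_prop sg E') ->
  ~ In x (vars b) -> (exists tau, unifies tau ((Var x, b) :: E)) ->
  exists sg, mgu_prop sg ((Var x, b) :: E).
Proof.
  intros IH Hx [tau Htau].
  set (th := elim_subst x b).
  assert (Key : forall (tau0 : V -> tm), tau0 x = subst tau0 b ->
    forall t, subst tau0 (subst th t) = subst tau0 t).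
  { intros tau0 Ht t. rewrite subst_comp. apply subst_ext. intros y _. unfold th, elim_subst.
    destruct (eqV y x); subst; auto. }
  assert (Hb : subst th b = b).
  { rewrite <- (subst_id b) at 2. apply subst_ext. intros y Hy. unfold th, elim_subst.
    destruct (eqV y x); subst; auto. contradiction. }
  assert (HE2 : forall tau, unifies tau ((Var x, b) :: E) -> unifies tau (subst_eqs th E)).
  { intros tau0 Hu. apply unifies_cons in Hu. destruct Hu as [H1 H2]. intros a c Hac.
    apply in_map_iff in Hac. destruct Hac as [[a0 c0] [Eq Hin]]. injection Eq as <- <-.
    rewrite !Key; auto. }
  destruct (IH (subst_eqs th E) (eqs_nvars_elim_lt x b E Hx) (ex_intro _ tau (HE2 tau Htau)))
    as [sg' [Hu' Hm']].
  exists (fun y => subst sg' (th y)). split.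
  - apply unifies_cons. split.
    + simpl. unfold th at 1, elim_subst. destruct (eqV x x); [|congruence].
      rewrite <- subst_comp. fold th. rewrite Hb. auto.
    + intros a c Hac. rewrite <- !subst_comp. apply Hu'. apply in_map_iff. exists (a, c); auto.
  - intros tau' Ht'. destruct (Hm' tau' (HE2 tau' Ht')) as [d Hd]. exists d. intros y.
    apply unifies_cons in Ht'. destruct Ht' as [H1 _]. simpl in H1.
    transitivity (subst tau' (subst th (Var y))); [symmetry; apply Key; auto|].
    rewrite subst_comp; simpl. rewrite subst_comp. apply subst_ext. auto.
Qed.

Lemma orient_eqs a b E : (forall sg, unifies sg ((b, a) :: E) <-> unifies sg ((a, b) :: E)) /\
  eqs_nvars ((b, a) :: E) = eqs_nvars ((a, b) :: E).
Proof.
  split.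
  - intros sg. rewrite !unifies_cons. split; intros [H1 H2]; auto.
  - apply eqs_nvars_ext. intros z. unfold eqs_vars. simpl. rewrite !in_app_iff. tauto.
Qed.

Lemma decompose_eqs f as_ bs E : length as_ = length bs ->
  (forall sg, unifies sg (combine as_ bs ++ E) <-> unifies sg ((Fun f as_, Fun f bs) :: E)) /\
  eqs_nvars (combine as_ bs ++ E) = eqs_nvars ((Fun f as_, Fun f bs) :: E) /\
  eqs_size (combine as_ bs ++ E) < eqs_size ((Fun f as_, Fun f bs) :: E).
Proof.
  intros Hl. split; [|split].
  - intros sg. rewrite unifies_app, unifies_cons, unifies_combine by auto. simpl.
    split; [intros [-> H]; auto|intros [H1 H2]; injection H1; auto].
  - apply eqs_nvars_ext. intros z. unfold eqs_vars. rewrite flat_map_app.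
    fold (eqs_vars (combine as_ bs)). fold (eqs_vars E).
    rewrite in_app_iff, eqs_vars_combine by auto. simpl. rewrite !in_app_iff. tauto.
  - unfold eqs_size. rewrite map_app, list_sum_app. fold (eqs_size (combine as_ bs)).
    rewrite eqs_size_combine by auto. simpl. lia.
Qed.

(* Unification by the usual transformation rules: each step either eliminates a variable
   or decreases the size of the equations. *)
Lemma mgu_exists_eqs : forall n m E, eqs_nvars E < n -> eqs_size E < m ->
  (exists tau, unifies tau E) -> exists sg, mgu_prop sg E.
Proof.
  induction n as [|n IHn]; [intros; lia|]. induction m as [|m IHm]; [intros; lia|].
  intros E Hn Hm [tau Ht].
  assert (IHe : forall E0, eqs_nvars E0 < S n -> forall E', eqs_nvars E' < eqs_nvars E0 ->
      (exists tau, unifies tau E') -> exists sg, mgu_prop sg E').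
  { intros E0 H0 E' H1 H2. apply (IHn (S (eqs_size E')) E'); auto; lia. }
  destruct E as [|[a b] E].
  { exists (fun x => Var x). split; [intros a b []|]. intros tau' _. exists tau'. reflexivity. }
  apply unifies_cons in Ht as Ht'. destruct Ht' as [Hab HtE].
  assert (Hsz : eqs_size E < m). { unfold eqs_size in *. simpl in Hm. pose proof (size_pos a). lia. }
  assert (Hnv : eqs_nvars E < S n).
  { eapply Nat.le_lt_trans; [|exact Hn]. apply length_nodup_incl.
    intros z Hz. simpl. apply in_or_app; auto. }
  destruct a as [x|f as_], b as [y|g bs].
  - destruct (eqV x y) as [<-|Hxy].
    + destruct (IHm E Hnv Hsz) as [sg Hsg]; [eauto|]. exists sg.
      revert Hsg. apply mgu_prop_equiv. intros tau'. rewrite unifies_cons. tauto.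
    + apply mgu_elim; [apply (IHe _ Hn)| |exists tau; auto]. intros [->|[]]; congruence.
  - destruct (classic (In x (vars (Fun g bs)))) as [Hin|Hnin].
    + exfalso. exact (occurs_check x g bs tau Hin Hab).
    + apply mgu_elim; [apply (IHe _ Hn)|auto|exists tau; auto].
  - destruct (orient_eqs (Fun f as_) (Var y) E) as [Hsw Hnvs].
    destruct (classic (In y (vars (Fun f as_)))) as [Hin|Hnin].
    + exfalso. exact (occurs_check y f as_ tau Hin (eq_sym Hab)).
    + destruct (mgu_elim y (Fun f as_) E) as [sg Hsg].
      * rewrite Hnvs. apply (IHe _ Hn).
      * auto.
      * exists tau. apply Hsw; auto.
      * exists sg. revert Hsg. apply mgu_prop_equiv. auto.
  - simpl in Hab. injection Hab as <- Hmap.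
    assert (Hl : length as_ = length bs) by (rewrite <- (length_map (subst tau) as_), Hmap, length_map; auto).
    destruct (decompose_eqs f as_ bs E Hl) as [Hiff [Hnv' Hsz']].
    destruct (IHm (combine as_ bs ++ E)) as [sg Hsg]; [lia|lia|exists tau; apply Hiff; auto|].
    exists sg. revert Hsg. apply mgu_prop_equiv. auto.
Qed.

Lemma mgu_exists a b (tau : V -> tm) : subst tau a = subst tau b -> exists sg, is_mgu sg a b.
Proof.
  intros H. destruct (mgu_exists_eqs (S (eqs_nvars [(a, b)])) (S (eqs_size [(a, b)])) [(a, b)])
    as [sg [Hu Hm]]; auto.
  { exists tau. apply unifies_cons; split; auto. intros ? ? []. }
  exists sg. split; [apply Hu; left; auto|].
  intros tau' Ht'. apply Hm. apply unifies_cons; split; auto. intros ? ? [].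
Qed.

End Unification.

Section CriticalPairs.
Context {F V : Type}.
Notation tm := (term F V).
Implicit Types (t w u s : tm) (ts us : list tm) (x y : V) (f : F) (p q : pos).
Hypothesis V_infinite : forall l : list V, exists x, ~ In x l.

Definition swap (a b x : V) : V := if eqV x a then b else if eqV x b then a else x.

Lemma swap_involutive (a b x : V) : swap a b (swap a b x) = x.
Proof.
  unfold swap. destruct (eqV x a); subst.
  - destruct (eqV b a); subst; [destruct (eqV a a); congruence|]. destruct (eqV b b); congruence.
  - destruct (eqV x b); subst.
    + destruct (eqV a a); congruence.
    + destruct (eqV x a); [congruence|]. destruct (eqV x b); congruence.
Qed.

Lemma renaming_comp (r1 r2 : V -> V) : renaming r1 -> renaming r2 -> renaming (fun x => r2 (r1 x)).
Proof.
  intros [i1 [A1 B1]] [i2 [A2 B2]]. exists (fun x => i1 (i2 x)). split; intros x.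
  - rewrite A2, A1; auto.
  - rewrite B1, B2; auto.
Qed.

Lemma fresh_renaming (xs A : list V) : exists rho, renaming rho /\ forall x, In x xs -> ~ In (rho x) A.
Proof.
  induction xs as [|x xs IH].
  { exists (fun x => x). split; [exists (fun x => x); auto|]. intros x []. }
  destruct IH as [rho' [Hr Hn]]. destruct (V_infinite (A ++ map rho' xs ++ [rho' x])) as [y Hy].
  exists (fun z => swap (rho' x) y (rho' z)). split.
  - apply renaming_comp; auto. exists (swap (rho' x) y). split; intros; apply swap_involutive.
  - intros z Hz. unfold swap. destruct (eqV (rho' z) (rho' x)).
    + intro; apply Hy; apply in_or_app; auto.
    + destruct (eqV (rho' z) y) as [E|].
      * exfalso. destruct Hz as [->|Hz]; [congruence|]. apply Hy.
        rewrite <- E. apply in_or_app; right; apply in_or_app; left. apply in_map; auto.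
      * destruct Hz as [->|Hz]; [congruence|]. auto.
Qed.

Lemma rename_apart (L1 R1 L2 R2 : tm) (mu1 mu2 : V -> tm) : exists (l1 r1 : tm) (tau : V -> tm),
  variant l1 r1 L1 R1 /\ (forall x, In x (vars l1 ++ vars r1) -> ~ In x (vars L2 ++ vars R2)) /\
  subst tau l1 = subst mu1 L1 /\ subst tau r1 = subst mu1 R1 /\
  forall x, In x (vars L2 ++ vars R2) -> tau x = mu2 x.
Proof.
  destruct (fresh_renaming (vars L1 ++ vars R1) (vars L2 ++ vars R2)) as [rho [Hren Hfr]].
  pose proof Hren as [rho' [Hri1 _]].
  set (l1 := subst (fun x => Var (rho x)) L1). set (r1 := subst (fun x => Var (rho x)) R1).
  assert (Hdisj : forall x, In x (vars l1 ++ vars r1) -> ~ In x (vars L2 ++ vars R2)).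
  { intros x Hx. unfold l1, r1 in Hx. rewrite !vars_rename, <- map_app in Hx. apply in_map_iff in Hx.
    destruct Hx as [y [<- Hy]]. auto. }
  set (tau := fun x => if excluded_middle_informative (In x (vars l1 ++ vars r1))
                       then mu1 (rho' x) else mu2 x).
  assert (Hcopy : forall t, incl (vars t) (vars L1 ++ vars R1) ->
    subst tau (subst (fun x => Var (rho x)) t) = subst mu1 t).
  { intros t Ht. rewrite subst_comp. apply subst_ext. intros y Hy. simpl. unfold tau.
    destruct (excluded_middle_informative _) as [_|Hn]; [rewrite Hri1; auto|].
    exfalso. apply Hn. unfold l1, r1. rewrite !vars_rename, <- map_app. apply in_map; auto. }
  exists l1, r1, tau. repeat split; auto.
  - exists rho. auto.
  - apply Hcopy. intros y Hy; apply in_or_app; auto.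
  - apply Hcopy. intros y Hy; apply in_or_app; auto.
  - intros x Hx. unfold tau. destruct (excluded_middle_informative _) as [Hi|_]; auto.
    exfalso. apply (Hdisj x Hi Hx).
Qed.

Variable R : @rules F V.
Hypothesis HTRS : is_TRS R.

Lemma critical_pair_lemma (L1 R1 L2 R2 : tm) (mu1 mu2 : V -> tm) p g gs :
  R L1 R1 -> R L2 R2 -> subterm L2 p = Some (Fun g gs) ->
  subterm (subst mu2 L2) p = Some (subst mu1 L1) ->
  (p = [] /\ subst mu1 R1 = subst mu2 R2) \/
  (exists tc uc (d : V -> tm), critical_pair R tc uc p /\
     subst d tc = replace_at p (subst mu2 L2) (subst mu1 R1) /\ subst d uc = subst mu2 R2).
Proof.
  intros Hr1 Hr2 Hg Es.
  destruct (rename_apart L1 R1 L2 R2 mu1 mu2) as [l1 [r1 [tau [Hvar [Hdisj [H1 [H1r H2]]]]]]].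
  assert (H2t : forall t, incl (vars t) (vars L2 ++ vars R2) -> subst tau t = subst mu2 t).
  { intros t Ht. apply subst_ext. auto. }
  assert (HgL2 : incl (vars (Fun g gs)) (vars L2 ++ vars R2)).
  { intros y Hy. apply in_or_app; left. eapply subterm_vars; eauto. }
  assert (HL2 : incl (vars L2) (vars L2 ++ vars R2)) by (intros y Hy; apply in_or_app; auto).
  assert (HR2 : incl (vars R2) (vars L2 ++ vars R2)) by (intros y Hy; apply in_or_app; auto).
  assert (Hunif : subst tau l1 = subst tau (Fun g gs)).
  { rewrite H1, H2t by auto. pose proof (subterm_subst mu2 _ _ _ Hg) as E. rewrite Es in E.
    injection E; auto. }
  destruct (mgu_exists _ _ _ Hunif) as [sg [Hsg Hmg]].
  destruct (Hmg tau Hunif) as [d Hd].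
  assert (Hsd : forall t, subst tau t = subst d (subst sg t)).
  { intros t. rewrite subst_comp. apply subst_ext. intros; auto. }
  destruct (classic (p = [] /\ variant l1 r1 L2 R2)) as [[-> [rho2 [_ [El Er]]]]|Hnv].
  - left. split; auto. simpl in Hg. injection Hg as ->.
    assert (HA : subst (fun x => tau (rho2 x)) (Fun g gs) = subst mu2 (Fun g gs)).
    { rewrite <- H2t by auto. rewrite <- Hunif, El, subst_comp. reflexivity. }
    rewrite <- H1r, Er, subst_comp. simpl. apply subst_ext. intros y Hy.
    apply (subst_ext_inv _ _ _ HA). apply (proj2 (HTRS _ _ Hr2)); auto.
  - right. exists (replace_at p (subst sg L2) (subst sg r1)), (subst sg R2), d. split; [|split].
    + exists l1, r1, L2, R2, sg, (Fun g gs). repeat split; eauto.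
      * exists L1, R1. auto.
      * exists L2, R2. split; auto. exists (fun x => x).
        split; [exists (fun x => x); auto|]. rewrite !subst_id; auto.
    + rewrite (replace_subst d _ p (subst sg (Fun g gs))) by (apply subterm_subst; auto).
      rewrite <- !Hsd, H1r, H2t; auto.
    + rewrite <- Hsd. apply H2t; auto.
Qed.

End CriticalPairs.

Section ParallelPeaks.
Context {F V : Type}.
Notation tm := (term F V).
Implicit Types (t w u s : tm) (ts us : list tm) (x y : V) (f : F) (p q : pos) (i j : nat).
Hypothesis V_infinite : forall l : list V, exists x, ~ In x l.
Variable R : @rules F V.
Hypothesis HTRS : is_TRS R.
Hypothesis HLL : left_linear R.
Hypothesis HAPC : almost_parallel_closed R.

Definition par_peak_joinable t P1 s P2 u :=
  (exists v P', rsteps R t v /\ par_red R P' u v /\ forall x, in_vars_at v P' x -> in_vars_at s P1 x) /\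
  (exists v P', par_red R P' t v /\ rsteps R u v /\ forall x, in_vars_at v P' x -> in_vars_at s P2 x).

Lemma par_peak_joinable_sym t P1 s P2 u :
  par_peak_joinable t P1 s P2 u -> par_peak_joinable u P2 s P1 t.
Proof. intros [[v [P [A [B C]]]] [v' [P' [A' [B' C']]]]]. split; [exists v', P'|exists v, P]; auto. Qed.

Lemma par_peak_joinable_refl s P1 P2 u : par_red R P2 s u -> par_peak_joinable s P1 s P2 u.
Proof.
  intros H. split.
  - exists u, []. split; [eapply par_red_rsteps; eauto|]. split; [apply par_red_refl|].
    intros x [p [_ [[] _]]].
  - exists u, P2. split; auto. split; [apply rt_refl|]. apply (par_red_in_vars_at R HTRS); auto.
Qed.

Lemma root_overlap_join (L1 R1 L2 R2 : tm) (mu1 mu2 : V -> tm) :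
  R L1 R1 -> R L2 R2 -> subst mu1 L1 = subst mu2 L2 ->
  exists v P', par_red R P' (subst mu1 R1) v /\ rsteps R (subst mu2 R2) v.
Proof.
  intros Hr1 Hr2 E.
  destruct L2 as [z|g gs]; [exfalso; apply (proj1 (HTRS _ _ Hr2) z); auto|].
  destruct (critical_pair_lemma V_infinite R HTRS L1 R1 (Fun g gs) R2 mu1 mu2 [] g gs Hr1 Hr2 eq_refl)
    as [[_ E2]|[tc [uc [d [Hcp [Etc Euc]]]]]]; [simpl; rewrite E; auto| |].
  - exists (subst mu2 R2), []. rewrite E2. split; [apply par_red_refl|apply rt_refl].
  - destruct (proj1 (HAPC _ _ _ Hcp) eq_refl) as [w [[Q HQ] Hw]].
    destruct (par_step_par_red R _ _ _ HQ) as [Q' [HQ' _]].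
    exists (subst d w), Q'. split.
    + apply (par_red_subst R d) in HQ'. rewrite Etc in HQ'. exact HQ'.
    + rewrite <- Euc. apply rsteps_subst; auto.
Qed.

Lemma par_peak_joinable_root_root (L1 R1 L2 R2 : tm) (mu1 mu2 : V -> tm) :
  R L1 R1 -> R L2 R2 -> subst mu1 L1 = subst mu2 L2 ->
  par_peak_joinable (subst mu1 R1) [[]] (subst mu1 L1) [[]] (subst mu2 R2).
Proof.
  intros Hr1 Hr2 E. split.
  - destruct (root_overlap_join L2 R2 L1 R1 mu2 mu1 Hr2 Hr1 (eq_sym E)) as [v [P' [Hp Hr]]].
    exists v, P'. split; auto. split; auto. intros x Hx. apply in_vars_at_root.
    apply in_vars_at_vars, (rsteps_vars R HTRS _ _ Hr) in Hx. apply (rule_vars R HTRS _ _ _ Hr1); auto.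
  - destruct (root_overlap_join L1 R1 L2 R2 mu1 mu2 Hr1 Hr2 E) as [v [P' [Hp Hr]]].
    exists v, P'. split; auto. split; auto. intros x Hx. apply in_vars_at_root.
    apply in_vars_at_vars, (rsteps_vars R HTRS _ _ Hr) in Hx. rewrite E.
    apply (rule_vars R HTRS _ _ _ Hr2); auto.
Qed.

Lemma join_args f ts us1 us2 Ps1 :
  length us1 = length ts -> length us2 = length ts -> length Ps1 = length ts ->
  (forall j tj u1 u2 Pa, nth_error ts j = Some tj -> nth_error us1 j = Some u1 ->
     nth_error us2 j = Some u2 -> nth_error Ps1 j = Some Pa -> exists v P', rsteps R u1 v /\
       par_red R P' u2 v /\ forall x, in_vars_at v P' x -> in_vars_at tj Pa x) ->
  exists v P', rsteps R (Fun f us1) v /\ par_red R P' (Fun f us2) v /\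
    forall x, in_vars_at v P' x -> in_vars_at (Fun f ts) (blocks Ps1) x.
Proof.
  intros Hl1 Hl2 Hl3 H.
  assert (Hex : forall j, j < length ts -> exists vP : tm * list pos, exists tj u1 u2 Pa,
    nth_error ts j = Some tj /\ nth_error us1 j = Some u1 /\ nth_error us2 j = Some u2 /\
    nth_error Ps1 j = Some Pa /\ rsteps R u1 (fst vP) /\ par_red R (snd vP) u2 (fst vP) /\
    forall x, in_vars_at (fst vP) (snd vP) x -> in_vars_at tj Pa x).
  { intros j Hj. destruct (nth_error_lt_Some ts j Hj) as [tj E0].
    destruct (nth_error_same_length ts us1 j tj) as [u1 E1]; auto.
    destruct (nth_error_same_length ts us2 j tj) as [u2 E2]; auto.
    destruct (nth_error_same_length ts Ps1 j tj) as [Pa E3]; auto.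
    destruct (H j tj u1 u2 Pa E0 E1 E2 E3) as [v [P' HH]]. exists (v, P'), tj, u1, u2, Pa. auto. }
  apply finite_choice in Hex. destruct Hex as [L [HlL HL]].
  exists (Fun f (map fst L)), (blocks (map snd L)). split; [|split].
  - apply rsteps_args; [rewrite length_map; lia|]. intros j a b Ea Eb. rewrite nth_error_map in Eb.
    destruct (nth_error L j) as [vP|] eqn:E4; [|discriminate]. injection Eb as <-.
    destruct (HL j vP E4) as [tj [u1 [u2 [Pa [_ [E1 [_ [_ [Hr _]]]]]]]]]. congruence.
  - constructor; rewrite ?length_map; try lia. intros j a b Pj Ea Eb Ec. rewrite nth_error_map in Eb, Ec.
    destruct (nth_error L j) as [vP|] eqn:E4; [|discriminate]. injection Eb as <-. injection Ec as <-.
    destruct (HL j vP E4) as [tj [u1 [u2 [Pa [_ [_ [E2 [_ [_ [Hp _]]]]]]]]]]. congruence.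
  - intros x Hx. apply in_vars_at_blocks in Hx. destruct Hx as [j [wj [Qj [Ea [Eb Hx]]]]].
    rewrite nth_error_map in Ea, Eb. destruct (nth_error L j) as [vP|] eqn:E4; [|discriminate].
    injection Ea as <-. injection Eb as <-.
    destruct (HL j vP E4) as [tj [u1 [u2 [Pa [E0 [_ [_ [E3 [_ [_ Hv]]]]]]]]]].
    apply in_vars_at_blocks. exists j, tj, Pa. auto.
Qed.

Lemma par_peak_joinable_args f ts us1 us2 Ps1 Ps2 :
  length us1 = length ts -> length us2 = length ts ->
  length Ps1 = length ts -> length Ps2 = length ts ->
  (forall j tj u1 u2 Pa Pb, nth_error ts j = Some tj -> nth_error us1 j = Some u1 ->
     nth_error us2 j = Some u2 -> nth_error Ps1 j = Some Pa -> nth_error Ps2 j = Some Pb ->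
     par_peak_joinable u1 Pa tj Pb u2) ->
  par_peak_joinable (Fun f us1) (blocks Ps1) (Fun f ts) (blocks Ps2) (Fun f us2).
Proof.
  intros Hl1 Hl2 Hl1' Hl2' Hcl. split.
  - apply join_args; auto. intros j tj u1 u2 Pa E0 E1 E2 E3.
    destruct (nth_error_same_length ts Ps2 j tj) as [Pb E4]; auto.
    apply (Hcl j tj u1 u2 Pa Pb); auto.
  - destruct (join_args f ts us2 us1 Ps2) as [v [P' [A [B C]]]]; auto.
    + intros j tj u2 u1 Pb E0 E2 E1 E4.
      destruct (nth_error_same_length ts Ps1 j tj) as [Pa E3]; auto.
      destruct (Hcl j tj u1 u2 Pa Pb) as [_ [v [P' [A [B C]]]]]; auto. exists v, P'. auto.
    + exists v, P'. auto.
Qed.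

(* Without overlaps the inner step only rewrites inside the substitution, so by left-linearity
   the root redex survives it and the two steps commute. *)
Lemma par_peak_joinable_root_below (L2 R2 : tm) (mu2 : V -> tm) P1 t :
  R L2 R2 -> par_red R P1 (subst mu2 L2) t ->
  (forall p, In p P1 -> forall g gs, subterm L2 p <> Some (Fun g gs)) ->
  par_peak_joinable t P1 (subst mu2 L2) [[]] (subst mu2 R2).
Proof.
  intros Hr2 H1 Hnf.
  destruct (par_red_below_linear R L2 (HLL _ _ Hr2) mu2 P1 t H1 Hnf) as [mu' [Et Hx]].
  set (Qx := fun x (Px : list pos) =>
    forall q, In q Px -> exists o, subterm L2 o = Some (Var x) /\ In (o ++ q) P1).
  destruct (par_red_subst_vars R Qx R2 mu2 mu') as [P' [HP' HPp]].
  { intros x Hx2. apply Hx. apply (proj2 (HTRS _ _ Hr2)); auto. }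
  split.
  - exists (subst mu' R2), P'. split; [|split; auto].
    + apply rt_step. exists [], L2, R2, mu'. rewrite Et. auto.
    + intros y [p [w [Hp [Ew Hy]]]]. destruct (HPp p Hp) as [o [x [q [Px [Eo [HQ [HPx [Hq ->]]]]]]]].
      rewrite subterm_app, (subterm_subst mu' _ _ _ Eo) in Ew. simpl in Ew.
      assert (Hiv : in_vars_at (mu' x) Px y) by (exists q, w; auto).
      apply (par_red_in_vars_at R HTRS _ _ _ HPx) in Hiv. destruct Hiv as [q' [w' [Hq' [Ew' Hy']]]].
      destruct (HQ q' Hq') as [o' [Eo' Ho']]. exists (o' ++ q'), w'. split; auto. split; auto.
      rewrite subterm_app, (subterm_subst mu2 _ _ _ Eo'). simpl. auto.
  - exists (subst mu' R2), [[]]. split; [|split].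
    + rewrite Et. constructor; auto.
    + eapply par_red_rsteps; eauto.
    + intros y Hy. apply in_vars_at_vars in Hy. apply in_vars_at_root.
      apply (par_red_vars R HTRS _ _ _ H1). rewrite Et. apply (rule_vars R HTRS _ _ _ Hr2); auto.
Qed.

Section RootStep.
Variable n : nat.
Hypothesis IH : forall s' P1' P2' t' u', redex_size s' P1' < n ->
  par_red R P1' s' t' -> par_red R P2' s' u' -> par_peak_joinable t' P1' s' P2' u'.

(* An inner redex at [p] overlapping [L2]: the critical pair at [p] is parallel closed, so after
   contracting that redex first the peak has a strictly smaller redex size. *)
Lemma par_peak_joinable_root_overlap (L2 R2 : tm) (mu2 : V -> tm) P1 t p g gs :
  R L2 R2 -> par_red R P1 (subst mu2 L2) t -> (forall p, In p P1 -> p <> []) ->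
  redex_size (subst mu2 L2) P1 <= n -> In p P1 -> subterm L2 p = Some (Fun g gs) ->
  par_peak_joinable t P1 (subst mu2 L2) [[]] (subst mu2 R2).
Proof.
  intros Hr2 H1 Hne Hn Hp Hg. set (s := subst mu2 L2) in *.
  destruct (par_red_redex R _ _ _ H1 p Hp) as [L1 [R1 [mu1 [Hr1 [Es Et]]]]].
  destruct (critical_pair_lemma V_infinite R HTRS L1 R1 L2 R2 mu1 mu2 p g gs Hr1 Hr2 Hg Es)
    as [[Hp0 _]|[tc [uc [d [Hcp [Etc Euc]]]]]]; [exfalso; apply (Hne p); auto|].
  destruct (proj2 (HAPC _ _ _ Hcp) (Hne p Hp)) as [Q HQ].
  destruct (par_step_par_red R _ _ _ HQ) as [Q' [HQ' _]].
  apply (par_red_subst R d) in HQ'. rewrite Etc, Euc in HQ'. fold s in HQ'.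
  set (s' := replace_at p s (subst mu1 R1)) in *.
  pose proof (par_red_remove R _ _ _ H1 p _ Hp Et) as Hrem. fold s' in Hrem.
  assert (Hsame : forall q, In q (remove pos_eq_dec p P1) -> In q P1 /\ subterm s' q = subterm s q).
  { intros q Hq. apply in_remove in Hq. destruct Hq as [Hq Hqp]. split; auto.
    apply subterm_replace_parallel. apply (par_red_parallel R _ _ _ H1); auto. }
  assert (Hm : redex_size s' (remove pos_eq_dec p P1) < n).
  { rewrite (redex_size_ext s' s) by (intros q Hq; apply Hsame; auto).
    pose proof (list_sum_map_remove pos_eq_dec (size_at s) P1 p (par_red_NoDup R _ _ _ H1) Hp) as Hsum.
    unfold size_at at 2 in Hsum. rewrite Es in Hsum. unfold redex_size in *.
    pose proof (size_pos (subst mu1 L1)). lia. }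
  destruct (IH s' (remove pos_eq_dec p P1) Q' t (subst mu2 R2) Hm Hrem HQ')
    as [[v1 [P1' [A1 [B1 C1]]]] [v2 [P2' [A2 [B2 C2]]]]].
  split.
  - exists v1, P1'. split; auto. split; auto. intros x Hx. apply C1 in Hx.
    destruct Hx as [q [w [Hq [Ew Hx]]]]. destruct (Hsame q Hq) as [Hq1 Hq2]. exists q, w.
    rewrite <- Hq2; auto.
  - exists v2, P2'. split; auto. split; auto. intros x Hx. apply C2, in_vars_at_vars in Hx.
    apply in_vars_at_root. apply (vars_replace s p (subst mu1 L1)) in Hx; auto. apply in_app_or in Hx.
    destruct Hx as [Hx|Hx]; auto. apply (rule_vars R HTRS _ _ _ Hr1) in Hx. eapply subterm_vars; eauto.
Qed.

Lemma par_peak_joinable_root (L2 R2 : tm) (mu2 : V -> tm) P1 t :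
  R L2 R2 -> par_red R P1 (subst mu2 L2) t -> (forall p, In p P1 -> p <> []) ->
  redex_size (subst mu2 L2) P1 <= n -> par_peak_joinable t P1 (subst mu2 L2) [[]] (subst mu2 R2).
Proof.
  intros Hr2 H1 Hne Hn.
  destruct (classic (exists p g gs, In p P1 /\ subterm L2 p = Some (Fun g gs)))
    as [[p [g [gs [Hp Hg]]]]|Hnone].
  - eapply par_peak_joinable_root_overlap; eauto.
  - apply par_peak_joinable_root_below; auto. intros p Hp g gs Eg. apply Hnone. eauto.
Qed.

End RootStep.

Lemma par_peak_joinable_all : forall n k s P1 P2 t u, size s <= k ->
  Nat.min (redex_size s P1) (redex_size s P2) <= n ->
  par_red R P1 s t -> par_red R P2 s u -> par_peak_joinable t P1 s P2 u.
Proof.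
  intros n. induction n as [n IHn] using lt_wf_ind. intros k.
  induction k as [|k IHk]; intros s P1 P2 t u Hk Hn H1 H2; [pose proof (size_pos s); lia|].
  assert (IH : forall s' P1' P2' t' u', redex_size s' P1' < n -> par_red R P1' s' t' ->
        par_red R P2' s' u' -> par_peak_joinable t' P1' s' P2' u').
  { intros s' P1' P2' t' u' Hlt. apply (IHn (Nat.min (redex_size s' P1') (redex_size s' P2')))
      with (size s'); auto; lia. }
  assert (Hroot : redex_size s [[]] = size s) by (unfold redex_size, size_at; simpl; lia).
  destruct (par_red_inv R _ _ _ H1)
    as [[-> ->]|[[-> [L1 [R1 [mu1 [Hr1 [-> ->]]]]]]|[f [ts [us1 [Ps1 [-> [-> [-> [Hl1 [Hl1' Hj1]]]]]]]]]]];
    [apply par_peak_joinable_refl; auto| |].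
  all: destruct (par_red_inv R _ _ _ H2)
    as [[-> ->]|[[-> [L2 [R2 [mu2 [Hr2 [Es ->]]]]]]|[f' [ts' [us2 [Ps2 [Es [-> [-> [Hl2 [Hl2' Hj2]]]]]]]]]]];
    try (apply par_peak_joinable_sym, par_peak_joinable_refl; auto; fail).
  - apply (par_peak_joinable_root_root L1 R1 L2 R2 mu1 mu2); auto.
  - apply par_peak_joinable_sym.
    apply (par_peak_joinable_root n IH L1 R1 mu1 _ _ Hr1 H2).
    + intros p Hp ->. eapply blocks_not_root; eauto.
    + pose proof (redex_size_le_size R _ _ _ H2). lia.
  - rewrite Es in *. apply (par_peak_joinable_root n IH L2 R2 mu2 _ _ Hr2 H1).
    + intros p Hp ->. eapply blocks_not_root; eauto.
    + pose proof (redex_size_le_size R _ _ _ H1). lia.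
  - injection Es as <- <-. apply par_peak_joinable_args; auto.
    intros j tj u1 u2 Pa Pb E0 E1 E2 E3 E4. apply (IHk tj Pa Pb u1 u2).
    + pose proof (size_arg f ts tj (nth_error_In _ _ E0)). lia.
    + pose proof (redex_size_block_le f ts Ps1 j tj Pa E0 E3).
      pose proof (redex_size_block_le f ts Ps2 j tj Pb E0 E4). lia.
    + eapply Hj1; eauto.
    + eapply Hj2; eauto.
Qed.
End ParallelPeaks.

Theorem lemma4 (F V : Type)
  (V_infinite : forall l : list V, exists x : V, ~ In x l)
  (R : @rules F V) :
  is_TRS R -> left_linear R -> almost_parallel_closed R ->
  forall (s t u : term F V) (P1 P2 : list pos),
    par_step R P1 s t -> par_step R P2 s u ->
    (exists v1 P1', rsteps R t v1 /\ par_step R P1' u v1 /\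
        (forall x, in_vars_at v1 P1' x -> in_vars_at s P1 x)) /\
    (exists v2 P2', par_step R P2' t v2 /\ rsteps R u v2 /\
        (forall x, in_vars_at v2 P2' x -> in_vars_at s P2 x)).
Proof.
  intros HTRS HLL HAPC s t u P1 P2 H1 H2.
  destruct (par_step_par_red R _ _ _ H1) as [Q1 [HQ1 HI1]].
  destruct (par_step_par_red R _ _ _ H2) as [Q2 [HQ2 HI2]].
  assert (Hsame : forall P Q x, (forall p, In p P <-> In p Q) -> in_vars_at s Q x -> in_vars_at s P x).
  { intros P Q x HPQ [p [w [Hp Hw]]]. exists p, w. rewrite HPQ. auto. }
  destruct (par_peak_joinable_all V_infinite R HTRS HLL HAPC _ _ s Q1 Q2 t u (le_n _) (le_n _) HQ1 HQ2)
    as [[v1 [P1' [A1 [B1 C1]]]] [v2 [P2' [A2 [B2 C2]]]]].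
  split.
  - exists v1, P1'. split; [|split]; [auto | apply par_red_par_step; auto |]. eauto.
  - exists v2, P2'. split; [|split]; [apply par_red_par_step; auto | auto |]. eauto.
Qed.
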